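(* Let $0\le a<b$, $0\le c<d$, $\alpha,\beta>0$, $H=[a,b]^n\times[c,d]^m$, and $S=\{(x,y)\in H\mid\prod_{i=1}^m y_i^\alpha\ge\prod_{j=1}^n x_j^\beta\}$. Let $k=\min\{m,\lfloor\beta/\alpha\rfloor\}$. For $i=0,\dots,m-k$ and $j=0,\dots,n-1$ let $S_{ij}=S\cap\{(x,y)\in H\mid y_r=d\ (r\le i),\ y_r=c\ (r\ge i+k+1),\ y_1\ge\dots\ge y_m,\ x_s=b\ (s\le j),\ x_s=a\ (s\ge j+2)\}$, and for $j=0,\dots,n$ let $C_j=S\cap\{(x,y)\in H\mid x_s=b\ (s\le j),\ x_s=a\ (s\ge j+1),\ y_1\ge\dots\ge y_m\}$. Let $T=\bigcup_{i,j}S_{ij}\cup\bigcup_jC_j$. Then $$\mathrm{conv}(S)=\{(x,y)\mid\exists(u,v):\ v\ge_m y,\ u\ge_m x,\ (u,v)\in\mathrm{conv}(T)\}.$$ Moreover, if $m\alpha\le\beta$, then $\mathrm{conv}(S)=\{(x,y)\in H\mid\prod_{i=1}^m y_i^{1/m}\ge\prod_{j=1}^n(u^{S(x)}_j)^{\beta/(m\alpha)}\}$.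
   Context: $v\ge_m y$ means $\sum_{i=1}^j v_{[i]}\ge\sum_{i=1}^j y_{[i]}$ for $j$ less than the dimension, with equality for the full sum ($v_{[i]}$ the $i$-th largest entry). For $x\in[a,b]^n$, $S(x)=\sum_{i=1}^n(x_i-a)$; for $s\in[0,n(b-a)]$, $i^s=\max\{i\in\{0,\dots,n\}\mid i(b-a)<s\}$ (with $i^0=0$), and $u^s\in\mathbb{R}^n$ is given by $u^s_i=b$ for $i\le i^s$, $u^s_{i^s+1}=a+s-(b-a)i^s$, $u^s_i=a$ for $i>i^s+1$. *)

From Stdlib Require Import Reals List Permutation Sorted.
Import ListNotations.
Open Scope R_scope.

(* A point (x,y) of R^n x R^m is a pair of lists of lengths n and m;
   list index t (0-based) corresponds to coordinate t+1 of the paper. *)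
Definition pt : Type := (list R * list R)%type.

Definition sum_list (l : list R) : R := fold_right Rplus 0 l.
Definition prod_list (l : list R) : R := fold_right Rmult 1 l.

Fixpoint sumR (K : nat) (f : nat -> R) : R :=
  match K with O => 0 | S K' => sumR K' f + f K' end.

(* t^e for t >= 0 and e > 0, with the convention 0^e = 0
   (Stdlib's Rpower 0 e is exp (e * ln 0) = 1, which is wrong here). *)
Definition rpow (t e : R) : R := if Rle_dec t 0 then 0 else Rpower t e.

Definition majorizes (v y : list R) : Prop :=
  length v = length y /\
  exists vs ys : list R,
    Permutation v vs /\ Sorted Rge vs /\
    Permutation y ys /\ Sorted Rge ys /\
    (forall j : nat, (j < length v)%nat ->
        sum_list (firstn j vs) >= sum_list (firstn j ys)) /\
    sum_list v = sum_list y.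

Definition conv (n m : nat) (A : pt -> Prop) (p : pt) : Prop :=
  length (fst p) = n /\ length (snd p) = m /\
  exists (K : nat) (lam : nat -> R) (px py : nat -> list R),
    (forall k, (k < K)%nat -> 0 <= lam k /\ A (px k, py k)) /\
    sumR K lam = 1 /\
    (forall t, (t < n)%nat -> nth t (fst p) 0 = sumR K (fun k => lam k * nth t (px k) 0)) /\
    (forall t, (t < m)%nat -> nth t (snd p) 0 = sumR K (fun k => lam k * nth t (py k) 0)).

Definition inH (n m : nat) (a b c d : R) (p : pt) : Prop :=
  length (fst p) = n /\ length (snd p) = m /\
  (forall t, (t < n)%nat -> a <= nth t (fst p) 0 <= b) /\
  (forall t, (t < m)%nat -> c <= nth t (snd p) 0 <= d).

Definition inS (n m : nat) (a b c d alpha beta : R) (p : pt) : Prop :=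
  inH n m a b c d p /\
  prod_list (map (fun t => rpow t alpha) (snd p)) >=
  prod_list (map (fun t => rpow t beta) (fst p)).

Definition nonincr (m : nat) (y : list R) : Prop :=
  forall t, (t + 1 < m)%nat -> nth t y 0 >= nth (t + 1) y 0.

(* S_ij (paper indices, 1-based conditions translated to 0-based) *)
Definition inSij (n m : nat) (a b c d alpha beta : R) (k i j : nat) (p : pt) : Prop :=
  inS n m a b c d alpha beta p /\
  (forall t, (t < m)%nat -> (t < i)%nat -> nth t (snd p) 0 = d) /\
  (forall t, (t < m)%nat -> (i + k <= t)%nat -> nth t (snd p) 0 = c) /\
  nonincr m (snd p) /\
  (forall t, (t < n)%nat -> (t < j)%nat -> nth t (fst p) 0 = b) /\
  (forall t, (t < n)%nat -> (j + 1 <= t)%nat -> nth t (fst p) 0 = a).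

Definition inCj (n m : nat) (a b c d alpha beta : R) (j : nat) (p : pt) : Prop :=
  inS n m a b c d alpha beta p /\
  (forall t, (t < n)%nat -> (t < j)%nat -> nth t (fst p) 0 = b) /\
  (forall t, (t < n)%nat -> (j <= t)%nat -> nth t (fst p) 0 = a) /\
  nonincr m (snd p).

Definition kdef (m : nat) (alpha beta : R) : nat :=
  Nat.min m (Z.to_nat (Int_part (beta / alpha))).

Definition inT (n m : nat) (a b c d alpha beta : R) (p : pt) : Prop :=
  (exists i j : nat, (i <= m - kdef m alpha beta)%nat /\ (j <= n - 1)%nat /\
     inSij n m a b c d alpha beta (kdef m alpha beta) i j p) \/
  (exists j : nat, (j <= n)%nat /\ inCj n m a b c d alpha beta j p).

Definition Sfun (a : R) (x : list R) : R := sum_list (map (fun t => t - a) x).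

(* i^s = max {i in {0..n} | i (b-a) < s}, and 0 if this set is empty *)
Fixpoint istar_aux (a b s : R) (i : nat) : nat :=
  match i with
  | O => O
  | S i' => if Rlt_dec (INR i * (b - a)) s then i else istar_aux a b s i'
  end.
Definition istar (n : nat) (a b s : R) : nat := istar_aux a b s n.

Definition ustar (n : nat) (a b s : R) : list R :=
  let i := istar n a b s in
  map (fun t => if Nat.ltb t i then b
                else if Nat.eqb t i then a + s - (b - a) * INR i
                else a) (seq 0 n).

From Stdlib Require Import Reals List Permutation Sorted Lra Lia Classical ZArith.
Import ListNotations.
Open Scope R_scope.

(* Both identities rest on the fact that conv S is invariant under permuting the x-coordinates
   and the y-coordinates, and is convex in each block separately; by Rado's theorem it therefore
   contains (x, y) as soon as it contains some (u, v) with u majorizing x and v majorizing y.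
   Conversely every point of S is majorized by a point of S whose x is u^(S(x)), with a single
   coordinate strictly between a and b, and whose y is sorted.  Scaling that coordinate by 1 + p z
   and the block of y-coordinates strictly between c and d by 1 + z, where p beta = (block length)
   alpha, keeps the point in S by Bernoulli's inequality as long as the block has more than k
   entries; following this segment both ways until a constraint becomes active writes the point
   as a convex combination of points with shorter blocks, hence of points of T.  Since the set of
   points majorized by conv T is convex, this gives the first identity.  When m alpha <= beta the
   right-hand side of the second identity is convex (the geometric mean is concave, s |-> prod u^s
   is convex and the exponent beta / (m alpha) is at least 1), contains S, and each of its points
   (x, y) has (u^(S(x)), y) in S. *)

Fixpoint prodR (K : nat) (f : nat -> R) : R :=
  match K with O => 1 | S K' => prodR K' f * f K' end.

Lemma sumR_ext K f g : (forall k, (k < K)%nat -> f k = g k) -> sumR K f = sumR K g.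
Proof. induction K; simpl; intros H; auto. rewrite IHK by (intros; apply H; lia). rewrite (H K) by lia; auto. Qed.

Lemma sumR_le K f g : (forall k, (k < K)%nat -> f k <= g k) -> sumR K f <= sumR K g.
Proof.
  induction K; simpl; intros H; [lra|].
  assert (H1 := H K ltac:(lia)). assert (sumR K f <= sumR K g) by (apply IHK; intros; apply H; lia). lra.
Qed.

Lemma sumR_add K f g : sumR K (fun k => f k + g k) = sumR K f + sumR K g.
Proof. induction K; simpl; [lra|]. rewrite IHK; lra. Qed.

Lemma sumR_scal K c f : sumR K (fun k => c * f k) = c * sumR K f.
Proof. induction K; simpl; [lra|]. rewrite IHK; lra. Qed.

Lemma sumR_const K c : sumR K (fun _ => c) = INR K * c.
Proof. induction K; cbn [sumR]. simpl; ring. rewrite IHK, S_INR. ring. Qed.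

Lemma sumR_const0 K : sumR K (fun _ => 0) = 0.
Proof. rewrite sumR_const; ring. Qed.

Lemma sumR_const1 K : sumR K (fun _ => 1) = INR K.
Proof. rewrite sumR_const; ring. Qed.

Lemma sumR_nonneg K f : (forall k, (k < K)%nat -> 0 <= f k) -> 0 <= sumR K f.
Proof. intros H. rewrite <- (sumR_const0 K). apply sumR_le; auto. Qed.

Lemma sumR_succ_l K f : sumR (S K) f = f 0%nat + sumR K (fun k => f (S k)).
Proof. induction K; simpl in *; [lra|]. rewrite IHK. lra. Qed.

Lemma sumR_split K1 K2 f : sumR (K1 + K2) f = sumR K1 f + sumR K2 (fun k => f (K1 + k)%nat).
Proof.
  induction K2; simpl. rewrite Nat.add_0_r; lra.
  rewrite Nat.add_succ_r. simpl. rewrite IHK2. lra.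
Qed.

Lemma sumR_eq0_nonneg K f : (forall k, (k < K)%nat -> 0 <= f k) -> sumR K f = 0 ->
  forall k, (k < K)%nat -> f k = 0.
Proof.
  induction K; simpl; intros H H0 k Hk; [lia|].
  assert (0 <= sumR K f) by (apply sumR_nonneg; intros; apply H; lia).
  assert (0 <= f K) by (apply H; lia).
  destruct (Nat.eq_dec k K). subst; lra. apply IHK; [intros; apply H; lia| lra | lia].
Qed.

Lemma sumR_le_range K K' f : (forall k, (k < K')%nat -> 0 <= f k) -> (K <= K')%nat -> sumR K f <= sumR K' f.
Proof.
  intros H HK. revert H. induction HK; intros H; [lra|]. simpl.
  assert (0 <= f m) by (apply H; lia). assert (sumR K f <= sumR m f) by (apply IHHK; intros; apply H; lia). lra.
Qed.

Lemma sumR_range_le p q f g : (p <= q)%nat -> (forall t, (p <= t < q)%nat -> f t <= g t) ->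
  sumR q f - sumR p f <= sumR q g - sumR p g.
Proof.
  intros H. induction H; intros Hfg; [lra|]. simpl.
  assert (f m <= g m) by (apply Hfg; lia).
  assert (sumR m f - sumR p f <= sumR m g - sumR p g) by (apply IHle; intros; apply Hfg; lia). lra.
Qed.

Lemma le_sumR_abs K f k : (k < K)%nat -> f k <= sumR K (fun t => Rabs (f t)).
Proof.
  intros Hk. induction K; [lia|]. simpl. destruct (Nat.eq_dec k K).
  - subst. assert (0 <= sumR K (fun t => Rabs (f t))) by (apply sumR_nonneg; intros; apply Rabs_pos).
    pose proof (Rle_abs (f K)). lra.
  - assert (f k <= sumR K (fun t => Rabs (f t))) by (apply IHK; lia). pose proof (Rabs_pos (f K)). lra.
Qed.

Lemma prodR_ext K f g : (forall k, (k < K)%nat -> f k = g k) -> prodR K f = prodR K g.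
Proof. induction K; simpl; intros H; auto. rewrite IHK by (intros; apply H; lia). rewrite (H K) by lia; auto. Qed.

Lemma prodR_mult K f g : prodR K (fun k => f k * g k) = prodR K f * prodR K g.
Proof. induction K; simpl; [lra|]. rewrite IHK; lra. Qed.

Lemma prodR_const K q : prodR K (fun _ => q) = q ^ K.
Proof. induction K; simpl; auto. rewrite IHK; ring. Qed.

Lemma prodR_nonneg K f : (forall k, (k < K)%nat -> 0 <= f k) -> 0 <= prodR K f.
Proof. induction K; simpl; intros H; [lra|]. apply Rmult_le_pos. apply IHK; intros; apply H; lia. apply H; lia. Qed.

Lemma prodR_eq0 K f k : (k < K)%nat -> f k = 0 -> prodR K f = 0.
Proof.
  induction K; simpl; intros Hk H; [lia|]. destruct (Nat.eq_dec k K). subst. rewrite H; lra.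
  rewrite IHK; auto; [lra|lia].
Qed.

Lemma prodR_succ_l K f : prodR (S K) f = f 0%nat * prodR K (fun k => f (S k)).
Proof. induction K; simpl in *; [lra|]. rewrite IHK. lra. Qed.

Lemma prodR_split K1 K2 f : prodR (K1 + K2) f = prodR K1 f * prodR K2 (fun k => f (K1 + k)%nat).
Proof. induction K2; simpl. rewrite Nat.add_0_r; lra. rewrite Nat.add_succ_r. simpl. rewrite IHK2. lra. Qed.

Lemma prodR_exp K f : prodR K (fun k => exp (f k)) = exp (sumR K f).
Proof. induction K; simpl. rewrite exp_0; auto. rewrite IHK, exp_plus; auto. Qed.

Lemma prodR_indicator K i e q : prodR K (fun t => if andb (Nat.leb i t) (Nat.ltb t e) then q else 1) =
  q ^ (Nat.min K e - Nat.min K i).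
Proof.
  induction K; [simpl; auto|]. cbn [prodR]. rewrite IHK.
  destruct (Nat.leb_spec i K); destruct (Nat.ltb_spec K e); cbn [andb].
  - replace (Nat.min (S K) e - Nat.min (S K) i)%nat with (S (Nat.min K e - Nat.min K i)) by lia. simpl; lra.
  - replace (Nat.min (S K) e - Nat.min (S K) i)%nat with (Nat.min K e - Nat.min K i)%nat by lia. lra.
  - replace (Nat.min (S K) e - Nat.min (S K) i)%nat with (Nat.min K e - Nat.min K i)%nat by lia. lra.
  - replace (Nat.min (S K) e - Nat.min (S K) i)%nat with (Nat.min K e - Nat.min K i)%nat by lia. lra.
Qed.

Definition vec (N : nat) (f : nat -> R) : list R := map f (seq 0 N).

Lemma vec_length N f : length (vec N f) = N.
Proof. unfold vec; rewrite length_map, length_seq; auto. Qed.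

Lemma vec_nth N f t : (t < N)%nat -> nth t (vec N f) 0 = f t.
Proof.
  intros H. unfold vec. rewrite nth_indep with (d' := f 0%nat) by (rewrite length_map, length_seq; auto).
  rewrite map_nth, seq_nth; auto.
Qed.

Lemma list_ext (l l' : list R) : length l = length l' ->
  (forall t, (t < length l)%nat -> nth t l 0 = nth t l' 0) -> l = l'.
Proof. intros H1 H2. apply nth_ext with (d := 0) (d' := 0); auto. Qed.

Lemma sum_list_map g l : sum_list (map g l) = sumR (length l) (fun t => g (nth t l 0)).
Proof.
  induction l; [reflexivity|]. change (length (a::l)) with (S (length l)). rewrite sumR_succ_l.
  unfold sum_list in *. cbn [map fold_right nth]. rewrite IHl. auto.
Qed.

Lemma sum_list_nth l : sum_list l = sumR (length l) (fun t => nth t l 0).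
Proof. rewrite <- (map_id l) at 1. apply sum_list_map. Qed.

Lemma prod_list_map g l : prod_list (map g l) = prodR (length l) (fun t => g (nth t l 0)).
Proof.
  induction l; [reflexivity|]. change (length (a::l)) with (S (length l)). rewrite prodR_succ_l.
  unfold prod_list in *. cbn [map fold_right nth]. rewrite IHl. auto.
Qed.

Lemma prod_list_nth l : prod_list l = prodR (length l) (fun t => nth t l 0).
Proof. rewrite <- (map_id l) at 1. apply prod_list_map. Qed.

Lemma sum_list_firstn j l : (j <= length l)%nat -> sum_list (firstn j l) = sumR j (fun t => nth t l 0).
Proof.
  revert j. induction l; intros j H. simpl in H. destruct j; [reflexivity|simpl in H; lia].
  destruct j; [reflexivity|]. rewrite sumR_succ_l. unfold sum_list in *. cbn [firstn fold_right nth].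
  rewrite IHl by (simpl in H; lia). auto.
Qed.

Lemma sum_list_perm l l' : Permutation l l' -> sum_list l = sum_list l'.
Proof. unfold sum_list; induction 1; simpl; lra. Qed.

Lemma prod_list_perm l l' : Permutation l l' -> prod_list l = prod_list l'.
Proof. unfold prod_list; induction 1; simpl; try lra; congruence. Qed.

Lemma nth_Permutation_bounds l l' lo hi : Permutation l l' ->
  (forall t, (t < length l)%nat -> lo <= nth t l 0 <= hi) ->
  forall t, (t < length l')%nat -> lo <= nth t l' 0 <= hi.
Proof.
  intros P H t Ht.
  assert (In (nth t l' 0) l) by (apply Permutation_in with l'; [apply Permutation_sym; auto| apply nth_In; auto]).
  apply In_nth with (d := 0) in H0. destruct H0 as [k [Hk E]]. rewrite <- E. auto.
Qed.

Lemma exp_le x y : x <= y -> exp x <= exp y.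
Proof. intros H. destruct (Rle_lt_or_eq_dec _ _ H). left; apply exp_increasing; auto. subst; lra. Qed.

Lemma ln_le_sub1 t : 0 < t -> ln t <= t - 1.
Proof. intros H. pose proof (exp_ineq1_le (ln t)). rewrite exp_ln in H0; auto. lra. Qed.

Lemma ln_div x y : 0 < x -> 0 < y -> ln (x / y) = ln x - ln y.
Proof. intros. unfold Rdiv. rewrite ln_mult, ln_Rinv; auto. apply Rinv_0_lt_compat; auto. Qed.

Lemma ln_concave u v l : 0 < u -> 0 < v -> 0 <= l <= 1 ->
  l * ln u + (1 - l) * ln v <= ln (l * u + (1 - l) * v).
Proof.
  intros Hu Hv Hl. set (M := l * u + (1 - l) * v).
  assert (HM : 0 < M).
  { unfold M. destruct (Rle_lt_or_eq_dec 0 l) as [h|h]; [lra| |].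
    - apply Rplus_lt_le_0_compat; [apply Rmult_lt_0_compat; lra| apply Rmult_le_pos; lra].
    - subst. lra. }
  assert (H1 : ln u - ln M <= u / M - 1).
  { rewrite <- ln_div by auto. apply ln_le_sub1. apply Rdiv_lt_0_compat; auto. }
  assert (H2 : ln v - ln M <= v / M - 1).
  { rewrite <- ln_div by auto. apply ln_le_sub1. apply Rdiv_lt_0_compat; auto. }
  assert (HMe : M = l * u + (1 - l) * v) by reflexivity. clearbody M.
  assert (H3 : l * (u / M - 1) + (1 - l) * (v / M - 1) = 0).
  { replace (l * (u / M - 1) + (1 - l) * (v / M - 1)) with ((l * u + (1 - l) * v) / M - 1) by (field; lra).
    rewrite <- HMe. field. lra. }
  assert (l * (ln u - ln M) <= l * (u / M - 1)) by (apply Rmult_le_compat_l; lra).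
  assert ((1-l) * (ln v - ln M) <= (1-l) * (v / M - 1)) by (apply Rmult_le_compat_l; lra).
  lra.
Qed.

Lemma rpow_nonneg t e : 0 <= rpow t e.
Proof. unfold rpow. destruct (Rle_dec t 0). lra. unfold Rpower. left; apply exp_pos. Qed.

Lemma rpow_pos t e : 0 < t -> rpow t e = Rpower t e.
Proof. intros H; unfold rpow. destruct (Rle_dec t 0); auto. lra. Qed.

Lemma rpow_0_l e : rpow 0 e = 0.
Proof. unfold rpow. destruct (Rle_dec 0 0); auto. lra. Qed.

Lemma rpow_1_l e : rpow 1 e = 1.
Proof. rewrite rpow_pos by lra. unfold Rpower. rewrite ln_1, Rmult_0_r, exp_0. auto. Qed.

Lemma rpow_1_r t : 0 <= t -> rpow t 1 = t.
Proof.
  intros Ht. destruct (Rle_lt_or_eq_dec 0 t Ht) as [h|h]; [|subst; rewrite !rpow_0_l; auto].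
  rewrite rpow_pos; auto. apply Rpower_1; auto.
Qed.

Lemma rpow_mult u v e : 0 <= u -> 0 <= v -> rpow (u * v) e = rpow u e * rpow v e.
Proof.
  intros Hu Hv.
  destruct (Rle_lt_or_eq_dec 0 u Hu) as [hu|hu]; [|subst; rewrite Rmult_0_l, rpow_0_l; lra].
  destruct (Rle_lt_or_eq_dec 0 v Hv) as [hv|hv]; [|subst; rewrite Rmult_0_r, rpow_0_l; lra].
  rewrite !rpow_pos; auto. rewrite Rpower_mult_distr; auto. apply Rmult_lt_0_compat; auto.
Qed.

Lemma rpow_le u v e : 0 <= e -> 0 <= u <= v -> rpow u e <= rpow v e.
Proof.
  intros He [Hu Huv].
  destruct (Rle_lt_or_eq_dec 0 u Hu) as [hu|hu]; [|subst; rewrite rpow_0_l; apply rpow_nonneg].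
  rewrite !rpow_pos by lra. apply Rle_Rpower_l; lra.
Qed.

Lemma rpow_rpow t e1 e2 : 0 <= t -> rpow (rpow t e1) e2 = rpow t (e1 * e2).
Proof.
  intros Ht. destruct (Rle_lt_or_eq_dec 0 t Ht) as [h|h]; [|subst; rewrite !rpow_0_l; auto].
  rewrite (rpow_pos t e1) by auto. rewrite rpow_pos. rewrite Rpower_mult. rewrite rpow_pos; auto.
  unfold Rpower; apply exp_pos.
Qed.

Lemma rpow_pow q e r : 0 < q -> (rpow q e) ^ r = rpow q (INR r * e).
Proof.
  intros H. rewrite !rpow_pos by auto. rewrite <- Rpower_pow by (unfold Rpower; apply exp_pos).
  rewrite Rpower_mult. f_equal. lra.
Qed.

Lemma rpow_div_mult t u e : 0 <= t -> 0 < u -> rpow (t / u) e * rpow u e = rpow t e.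
Proof.
  intros Ht Hu. rewrite <- rpow_mult. f_equal. field. lra.
  unfold Rdiv; apply Rmult_le_pos; auto. left; apply Rinv_0_lt_compat; auto. lra.
Qed.

Lemma prodR_rpow K f e : (forall k, (k < K)%nat -> 0 <= f k) ->
  prodR K (fun k => rpow (f k) e) = rpow (prodR K f) e.
Proof.
  induction K; intros H; simpl. symmetry; apply rpow_1_l. rewrite IHK by (intros; apply H; lia).
  rewrite rpow_mult; auto. apply prodR_nonneg; intros; apply H; lia.
Qed.

Lemma prod_list_rpow l e : (forall t, (t < length l)%nat -> 0 <= nth t l 0) ->
  prod_list (map (fun t => rpow t e) l) = rpow (prod_list l) e.
Proof. intros H. rewrite prod_list_map, prod_list_nth. apply prodR_rpow. auto. Qed.

Lemma rpow_bernoulli z p : -1 < z -> 1 <= p -> 1 + p * z <= rpow (1 + z) p.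
Proof.
  intros Hz Hp. destruct (Rle_dec (1 + p * z) 0). pose proof (rpow_nonneg (1+z) p); lra.
  apply Rnot_le_lt in n. rewrite rpow_pos by lra. unfold Rpower.
  (* 1 + z is the convex combination of 1 + p z and 1 with weight 1/p *)
  pose proof (ln_concave (1 + p * z) 1 (/ p) ltac:(lra) ltac:(lra)).
  assert (0 < / p) by (apply Rinv_0_lt_compat; lra).
  assert (/ p <= 1). { rewrite <- Rinv_1. apply Rinv_le_contravar; lra. }
  specialize (H ltac:(lra)). rewrite ln_1 in H.
  replace (/ p * (1 + p * z) + (1 - / p) * 1) with (1 + z) in H by (field; lra).
  assert (ln (1 + p * z) <= p * ln (1 + z)).
  { replace (ln (1 + p * z)) with (p * (/ p * ln (1 + p * z))) by (field; lra). apply Rmult_le_compat_l; lra. }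
  rewrite <- (exp_ln (1 + p * z)) at 1 by lra. apply exp_le. lra.
Qed.

Lemma rpow_convex g t1 t2 l : 1 <= g -> 0 <= t1 -> 0 <= t2 -> 0 <= l <= 1 ->
  rpow (l * t1 + (1 - l) * t2) g <= l * rpow t1 g + (1 - l) * rpow t2 g.
Proof.
  intros Hg H1 H2 Hl. set (r := l * t1 + (1 - l) * t2).
  assert (Hr : 0 <= r) by (unfold r; apply Rplus_le_le_0_compat; apply Rmult_le_pos; lra).
  destruct (Rle_lt_or_eq_dec 0 r Hr) as [hr|hr].
  2:{ rewrite <- hr, rpow_0_l. pose proof (rpow_nonneg t1 g); pose proof (rpow_nonneg t2 g).
      apply Rplus_le_le_0_compat; apply Rmult_le_pos; lra. }
  (* the tangent line at r, obtained from Bernoulli's inequality *)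
  assert (Tangent : forall t, 0 <= t -> rpow r g * (1 + g * (t / r - 1)) <= rpow t g).
  { intros t Ht. destruct (Rle_lt_or_eq_dec 0 t Ht) as [ht|ht].
    2:{ subst t. rewrite rpow_0_l. unfold Rdiv. rewrite Rmult_0_l. pose proof (rpow_nonneg r g).
        assert (1 + g * (0 - 1) <= 0) by lra.
        assert (rpow r g * (1 + g * (0 - 1)) <= rpow r g * 0) by (apply Rmult_le_compat_l; lra). lra. }
    rewrite <- (rpow_div_mult t r g Ht hr). rewrite Rmult_comm. apply Rmult_le_compat_r. apply rpow_nonneg.
    replace (t / r) with (1 + (t / r - 1)) at 2 by ring. apply rpow_bernoulli; auto.
    assert (0 < t / r) by (apply Rdiv_lt_0_compat; auto). lra. }
  pose proof (Tangent t1 H1). pose proof (Tangent t2 H2).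
  assert (l * (rpow r g * (1 + g * (t1 / r - 1))) + (1 - l) * (rpow r g * (1 + g * (t2 / r - 1))) = rpow r g).
  { assert (Hre : r = l * t1 + (1 - l) * t2) by reflexivity. clearbody r.
    replace (l * (rpow r g * (1 + g * (t1 / r - 1))) + (1 - l) * (rpow r g * (1 + g * (t2 / r - 1))))
      with (rpow r g * (1 + g * ((l * t1 + (1 - l) * t2) / r - 1))) by (field; lra).
    rewrite <- Hre. field. lra. }
  assert (l * (rpow r g * (1 + g * (t1 / r - 1))) <= l * rpow t1 g) by (apply Rmult_le_compat_l; lra).
  assert ((1-l) * (rpow r g * (1 + g * (t2 / r - 1))) <= (1-l) * rpow t2 g) by (apply Rmult_le_compat_l; lra).
  lra.
Qed.

(** * The geometric mean *)

Definition GM (m : nat) (f : nat -> R) := prodR m (fun t => rpow (f t) (1 / INR m)).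

Lemma GM_nonneg m f : 0 <= GM m f.
Proof. unfold GM. apply prodR_nonneg; intros; apply rpow_nonneg. Qed.

Lemma GM_ext m f g : (forall t, (t < m)%nat -> f t = g t) -> GM m f = GM m g.
Proof. intros H; unfold GM; apply prodR_ext; intros; rewrite H; auto. Qed.

Lemma GM_eq0 m f t : (t < m)%nat -> f t = 0 -> GM m f = 0.
Proof. intros Ht H. unfold GM. apply (prodR_eq0 _ _ t Ht). rewrite H; apply rpow_0_l. Qed.

Lemma GM_mult m f g : (forall t, (t < m)%nat -> 0 <= f t) -> (forall t, (t < m)%nat -> 0 <= g t) ->
  GM m (fun t => f t * g t) = GM m f * GM m g.
Proof. intros Hf Hg. unfold GM. rewrite <- prodR_mult. apply prodR_ext. intros. apply rpow_mult; auto. Qed.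

Lemma GM_const m l : (1 <= m)%nat -> 0 <= l -> GM m (fun _ => l) = l.
Proof.
  intros Hm Hl. unfold GM. rewrite prodR_const. destruct (Rle_lt_or_eq_dec 0 l Hl) as [h|h].
  - rewrite rpow_pow by auto. replace (INR m * (1 / INR m)) with 1. apply rpow_1_r; auto.
    field. apply not_0_INR; lia.
  - subst. rewrite rpow_0_l. destruct m; [lia|]. simpl; ring.
Qed.

Lemma GM_scal m l f : (1 <= m)%nat -> 0 <= l -> (forall t, (t < m)%nat -> 0 <= f t) ->
  GM m (fun t => l * f t) = l * GM m f.
Proof. intros Hm Hl Hf. rewrite GM_mult by (auto; intros; lra). rewrite GM_const; auto. Qed.

Lemma amgm_pos m (z : nat -> R) : (1 <= m)%nat -> (forall t, (t < m)%nat -> 0 < z t) ->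
  GM m z <= (1 / INR m) * sumR m z.
Proof.
  intros Hm Hz. assert (HmR : 0 < INR m) by (apply lt_0_INR; lia).
  assert (Hs : 0 < sumR m z).
  { destruct m; [lia|]. simpl. apply Rplus_le_lt_0_compat.
    apply sumR_nonneg; intros; left; apply Hz; lia. apply Hz; lia. }
  set (M := 1 / INR m * sumR m z).
  assert (HM : 0 < M) by (unfold M; apply Rmult_lt_0_compat; auto; apply Rdiv_lt_0_compat; lra).
  unfold GM. rewrite (prodR_ext _ _ (fun t => exp (1 / INR m * ln (z t)))).
  2:{ intros k Hk. rewrite rpow_pos by auto. unfold Rpower; auto. }
  rewrite prodR_exp. rewrite <- (exp_ln M) by auto. apply exp_le.
  rewrite sumR_scal.
  assert (Hln : sumR m (fun t => ln (z t) - ln M) <= sumR m (fun t => z t / M - 1)).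
  { apply sumR_le. intros k Hk. rewrite <- ln_div by auto. apply ln_le_sub1. apply Rdiv_lt_0_compat; auto. }
  rewrite (sumR_ext m (fun t => ln (z t) - ln M) (fun t => ln (z t) + (- ln M))), sumR_add, sumR_const in Hln
    by (intros; ring).
  rewrite (sumR_ext m (fun t => z t / M - 1) (fun t => / M * z t + (- 1))), sumR_add, sumR_const, sumR_scal in Hln
    by (intros; unfold Rdiv; ring).
  replace (/ M * sumR m z) with (INR m) in Hln by (unfold M; field; lra).
  apply Rmult_le_reg_l with (INR m); auto.
  replace (INR m * (1 / INR m * sumR m (fun t => ln (z t)))) with (sumR m (fun t => ln (z t))) by (field; lra).
  lra.
Qed.

Lemma amgm m (z : nat -> R) : (1 <= m)%nat -> (forall t, (t < m)%nat -> 0 <= z t) ->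
  GM m z <= (1 / INR m) * sumR m z.
Proof.
  intros Hm Hz. destruct (classic (exists t, (t < m)%nat /\ z t = 0)) as [[t [Ht H0]]|Hn].
  - rewrite (GM_eq0 _ _ t Ht H0). apply Rmult_le_pos.
    unfold Rdiv; rewrite Rmult_1_l; left; apply Rinv_0_lt_compat; apply lt_0_INR; lia. apply sumR_nonneg; auto.
  - apply amgm_pos; auto. intros t Ht. destruct (Rle_lt_or_eq_dec 0 (z t) (Hz t Ht)); auto.
    exfalso; apply Hn; eauto.
Qed.

Lemma GM_add_le1 m z z' : (1 <= m)%nat -> (forall t, (t < m)%nat -> 0 <= z t) -> (forall t, (t < m)%nat -> 0 <= z' t) ->
  (forall t, (t < m)%nat -> z t + z' t = 1) -> GM m z + GM m z' <= 1.
Proof.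
  intros Hm Hz Hz' H1. pose proof (amgm m z Hm Hz). pose proof (amgm m z' Hm Hz').
  assert (sumR m z + sumR m z' = INR m).
  { rewrite <- sumR_add, <- sumR_const1. apply sumR_ext. auto. }
  assert (1 / INR m * sumR m z + 1 / INR m * sumR m z' = 1).
  { rewrite <- Rmult_plus_distr_l, H2. field. apply not_0_INR; lia. }
  lra.
Qed.

Lemma GM_concave m y y' l : (1 <= m)%nat -> (forall t, (t < m)%nat -> 0 <= y t) ->
  (forall t, (t < m)%nat -> 0 <= y' t) -> 0 <= l <= 1 ->
  l * GM m y + (1 - l) * GM m y' <= GM m (fun t => l * y t + (1 - l) * y' t).
Proof.
  intros Hm Hy Hy' Hl. set (w := fun t => l * y t + (1 - l) * y' t).
  assert (Hly : forall t, (t < m)%nat -> 0 <= l * y t) by (intros t Ht; pose proof (Hy t Ht); apply Rmult_le_pos; lra).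
  assert (Hly' : forall t, (t < m)%nat -> 0 <= (1 - l) * y' t)
    by (intros t Ht; pose proof (Hy' t Ht); apply Rmult_le_pos; lra).
  destruct (classic (exists t, (t < m)%nat /\ w t = 0)) as [[t [Ht H0]]|Hn].
  - unfold w in H0. pose proof (Hly t Ht); pose proof (Hly' t Ht).
    rewrite <- !GM_scal by (auto; lra). rewrite (GM_eq0 m _ t Ht), (GM_eq0 m _ t Ht) by lra.
    pose proof (GM_nonneg m w). lra.
  - assert (Hwp : forall t, (t < m)%nat -> 0 < w t).
    { intros t Ht. pose proof (Hly t Ht); pose proof (Hly' t Ht).
      assert (Hw : 0 <= w t) by (unfold w; lra).
      destruct (Rle_lt_or_eq_dec 0 (w t) Hw); auto. exfalso; apply Hn; eauto. }
    (* split w pointwise into the shares l y / w and (1 - l) y' / w, which add up to 1 *)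
    set (z := fun t => l * y t / w t). set (z' := fun t => (1 - l) * y' t / w t).
    assert (Hz : forall t, (t < m)%nat -> 0 <= z t)
      by (intros t Ht; unfold z; apply Rmult_le_pos; auto; left; apply Rinv_0_lt_compat; auto).
    assert (Hz' : forall t, (t < m)%nat -> 0 <= z' t)
      by (intros t Ht; unfold z'; apply Rmult_le_pos; auto; left; apply Rinv_0_lt_compat; auto).
    assert (Hsum : GM m z + GM m z' <= 1).
    { apply GM_add_le1; auto. intros t Ht. pose proof (Hwp t Ht). unfold z, z', w in *. field. lra. }
    assert (E1 : GM m z * GM m w = l * GM m y).
    { rewrite <- GM_mult, <- GM_scal by (auto; try lra; intros t Ht; pose proof (Hwp t Ht); lra).
      apply GM_ext. intros t Ht. unfold z. pose proof (Hwp t Ht). field. lra. }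
    assert (E2 : GM m z' * GM m w = (1 - l) * GM m y').
    { rewrite <- GM_mult, <- GM_scal by (auto; try lra; intros t Ht; pose proof (Hwp t Ht); lra).
      apply GM_ext. intros t Ht. unfold z'. pose proof (Hwp t Ht). field. lra. }
    rewrite <- E1, <- E2. pose proof (GM_nonneg m w).
    assert ((GM m z + GM m z') * GM m w <= 1 * GM m w) by (apply Rmult_le_compat_r; lra). lra.
Qed.

(** * Convex hulls *)

Definition comb2 (N : nat) (l : R) (x x' : list R) : list R :=
  vec N (fun t => l * nth t x 0 + (1 - l) * nth t x' 0).

Definition pcomb (n m : nat) (l : R) (p q : pt) : pt :=
  (comb2 n l (fst p) (fst q), comb2 m l (snd p) (snd q)).

Definition convex_set (n m : nat) (B : pt -> Prop) : Prop :=
  forall p q l, B p -> B q -> 0 <= l <= 1 -> B (pcomb n m l p q).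

Definition combK (N K : nat) (lam : nat -> R) (px : nat -> list R) : list R :=
  vec N (fun t => sumR K (fun k => lam k * nth t (px k) 0)).

Lemma comb2_length N l x x' : length (comb2 N l x x') = N.
Proof. apply vec_length. Qed.

Lemma comb2_nth N l x x' t : (t < N)%nat -> nth t (comb2 N l x x') 0 = l * nth t x 0 + (1 - l) * nth t x' 0.
Proof. apply vec_nth. Qed.

Lemma comb2_same N l v : length v = N -> comb2 N l v v = v.
Proof.
  intros H. apply list_ext. rewrite comb2_length; auto. intros t Ht. rewrite comb2_length in Ht.
  rewrite comb2_nth; auto. ring.
Qed.

Lemma conv_combK n m A p : conv n m A p -> exists K lam px py,
  (forall k, (k < K)%nat -> 0 <= lam k /\ A (px k, py k)) /\ sumR K lam = 1 /\
  p = (combK n K lam px, combK m K lam py).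
Proof.
  intros [H1 [H2 [K [lam [px [py [H3 [H4 [H5 H6]]]]]]]]]. exists K, lam, px, py. split; auto. split; auto.
  destruct p as [x y]; simpl in *. f_equal; apply list_ext; unfold combK; rewrite ?vec_length; auto;
  intros t Ht; rewrite vec_nth; try lia; auto. apply H5; lia. apply H6; lia.
Qed.

Lemma combK_conv n m A K lam px py : (forall k, (k < K)%nat -> 0 <= lam k /\ A (px k, py k)) -> sumR K lam = 1 ->
  conv n m A (combK n K lam px, combK m K lam py).
Proof.
  intros H1 H2. unfold conv; simpl. unfold combK. rewrite !vec_length. split; auto. split; auto.
  exists K, lam, px, py. split; [|split; [auto|split]]; auto; intros; rewrite ?vec_nth; auto.
Qed.

Lemma mem_conv n m (A : pt -> Prop) p : A p -> length (fst p) = n -> length (snd p) = m -> conv n m A p.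
Proof.
  intros H1 H2 H3. repeat split; auto. exists 1%nat, (fun _ => 1), (fun _ => fst p), (fun _ => snd p).
  repeat split; simpl; try lra. destruct p; auto. intros; ring. intros; ring.
Qed.

Lemma conv_mono n m (A A' : pt -> Prop) p : (forall q, A q -> A' q) -> conv n m A p -> conv n m A' p.
Proof.
  intros H [H1 [H2 [K [lam [px [py [H3 H4]]]]]]]. repeat split; auto. exists K, lam, px, py. split; auto.
  intros k Hk; split; apply H3 in Hk; [tauto|apply H; tauto].
Qed.

Lemma conv_min n m (A B : pt -> Prop) :
  (forall p, A p -> length (fst p) = n /\ length (snd p) = m) ->
  (forall p, A p -> B p) -> convex_set n m B -> forall p, conv n m A p -> B p.
Proof.
  intros HL HAB HB p Hp. apply conv_combK in Hp. destruct Hp as [K [lam [px [py [H1 [H2 ->]]]]]].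
  revert lam H1 H2. induction K; intros lam H1 H2. simpl in H2; lra.
  simpl in H2. set (L := lam K) in *. assert (HL0 : 0 <= L) by (apply H1; lia).
  assert (Hs : 0 <= sumR K lam) by (apply sumR_nonneg; intros; apply H1; lia).
  destruct (HL (px K, py K)) as [Lx Ly]; [apply H1; lia|]. simpl in Lx, Ly.
  destruct (Rle_lt_or_eq_dec L 1 ltac:(lra)) as [hL|hL].
  - (* renormalise the first K weights and combine with the last point *)
    set (s := 1 - L). assert (Hs0 : 0 < s) by (unfold s; lra).
    specialize (IHK (fun k => lam k / s)).
    assert (Hq : B (combK n K (fun k => lam k / s) px, combK m K (fun k => lam k / s) py)).
    { apply IHK. intros k Hk. split. unfold Rdiv; apply Rmult_le_pos; [apply H1; lia| left; apply Rinv_0_lt_compat; auto].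
      apply H1; lia.
      unfold Rdiv. rewrite (sumR_ext _ _ (fun k => / s * lam k)) by (intros; ring). rewrite sumR_scal.
      unfold s. replace (sumR K lam) with (1 - L) by lra. field. lra. }
    assert (Hpk : B (px K, py K)) by (apply HAB, H1; lia).
    pose proof (HB _ _ s Hq Hpk ltac:(unfold s; lra)) as HH.
    replace (combK n (S K) lam px, combK m (S K) lam py) with
      (pcomb n m s (combK n K (fun k => lam k / s) px, combK m K (fun k => lam k / s) py) (px K, py K)); auto.
    unfold pcomb, comb2, combK; simpl. f_equal; apply list_ext; rewrite ?vec_length; auto;
    intros t Ht; rewrite !vec_nth; auto; simpl; unfold Rdiv;
    rewrite (sumR_ext _ _ (fun k => / s * (lam k * nth t _ 0))) by (intros; ring); rewrite sumR_scal;
    fold L; unfold s; field; lra.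
  - assert (H0 : forall k, (k < K)%nat -> lam k = 0) by (apply sumR_eq0_nonneg; [intros; apply H1; lia| lra]).
    replace (combK n (S K) lam px, combK m (S K) lam py) with (px K, py K). apply HAB, H1; lia.
    unfold combK; simpl. f_equal; apply list_ext; rewrite ?vec_length; auto; intros t Ht; rewrite vec_nth; try lia;
    rewrite (sumR_ext _ _ (fun _ => 0)) by (intros k Hk; rewrite H0; auto; ring); rewrite sumR_const0;
    fold L; rewrite hL; ring.
Qed.
Definition glue {X : Type} (K1 : nat) (f g : nat -> X) (k : nat) : X :=
  if Nat.ltb k K1 then f k else g (k - K1)%nat.

Lemma sumR_glue K1 K2 (f g : nat -> R) : sumR (K1 + K2) (glue K1 f g) = sumR K1 f + sumR K2 g.
Proof.
  unfold glue. rewrite sumR_split. f_equal.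
  - apply sumR_ext. intros k Hk. destruct (Nat.ltb_spec k K1); [auto|lia].
  - apply sumR_ext. intros k Hk. destruct (Nat.ltb_spec (K1 + k) K1); [lia|]. f_equal. lia.
Qed.

Lemma comb2_combK N l K1 K2 lam1 lam2 px1 px2 :
  comb2 N l (combK N K1 lam1 px1) (combK N K2 lam2 px2) =
  combK N (K1 + K2) (glue K1 (fun k => l * lam1 k) (fun k => (1 - l) * lam2 k)) (glue K1 px1 px2).
Proof.
  apply list_ext; unfold combK; rewrite ?comb2_length, ?vec_length; auto. intros t Ht.
  rewrite comb2_nth, !vec_nth by auto.
  rewrite (sumR_ext (K1 + K2) _ (glue K1 (fun k => l * (lam1 k * nth t (px1 k) 0)) (fun k => (1 - l) * (lam2 k * nth t (px2 k) 0))))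
    by (intros k Hk; unfold glue; destruct (Nat.ltb k K1); ring).
  rewrite sumR_glue, !sumR_scal. auto.
Qed.

Lemma conv_convex n m A : convex_set n m (conv n m A).
Proof.
  intros p q l Hp Hq Hl. apply conv_combK in Hp. apply conv_combK in Hq.
  destruct Hp as [K1 [lam1 [px1 [py1 [H1 [H2 ->]]]]]]. destruct Hq as [K2 [lam2 [px2 [py2 [H3 [H4 ->]]]]]].
  unfold pcomb; simpl. rewrite !comb2_combK. apply combK_conv.
  - intros k Hk. unfold glue. destruct (Nat.ltb_spec k K1).
    + destruct (H1 k) as [? ?]; auto. split; auto. apply Rmult_le_pos; lra.
    + destruct (H3 (k - K1)%nat) as [? ?]; [lia|]. split; auto. apply Rmult_le_pos; lra.
  - rewrite sumR_glue, !sumR_scal, H2, H4. ring.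
Qed.

(** * Majorization *)

Fixpoint insert_desc (x : R) (l : list R) : list R :=
  match l with
  | [] => [x]
  | h :: t => if Rle_dec h x then x :: h :: t else h :: insert_desc x t
  end.

Fixpoint sort_desc (l : list R) : list R :=
  match l with [] => [] | h :: t => insert_desc h (sort_desc t) end.

Lemma insert_desc_perm x l : Permutation (x :: l) (insert_desc x l).
Proof.
  induction l; simpl; auto. destruct (Rle_dec a x); auto.
  eapply perm_trans. apply perm_swap. apply perm_skip; auto.
Qed.

Lemma sort_desc_perm l : Permutation l (sort_desc l).
Proof. induction l; simpl; auto. eapply perm_trans. apply perm_skip; eauto. apply insert_desc_perm. Qed.

Lemma insert_desc_sorted x l : Sorted Rge l -> Sorted Rge (insert_desc x l).
Proof.
  induction 1; simpl. repeat constructor. destruct (Rle_dec a x).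
  - constructor. constructor; auto. constructor; lra.
  - constructor. auto. inversion H0; subst; simpl. constructor; lra.
    destruct (Rle_dec b x); constructor; lra.
Qed.

Lemma sort_desc_sorted l : Sorted Rge (sort_desc l).
Proof. induction l; simpl. constructor. apply insert_desc_sorted; auto. Qed.

Lemma sorted_nonincr l : Sorted Rge l -> nonincr (length l) l.
Proof.
  induction 1; unfold nonincr; simpl; intros t Ht; [lia|].
  destruct t. simpl. inversion H0; subst. simpl in Ht; lia. simpl. lra.
  replace (S t + 1)%nat with (S (t + 1)) by lia. simpl. apply IHSorted. lia.
Qed.

Lemma sort_desc_nonincr l : nonincr (length (sort_desc l)) (sort_desc l).
Proof. apply sorted_nonincr, sort_desc_sorted. Qed.

Lemma nonincr_sorted l : nonincr (length l) l -> Sorted Rge l.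
Proof.
  induction l; intros H; constructor.
  apply IHl. intros t Ht. specialize (H (S t)). simpl in H. apply H. lia.
  destruct l; constructor. specialize (H 0%nat). simpl in H. apply H. lia.
Qed.

Lemma nonincr_mono N l t t' : nonincr N l -> (t <= t')%nat -> (t' < N)%nat -> nth t l 0 >= nth t' l 0.
Proof.
  intros H Htt. induction Htt; intros; [lra|]. specialize (H m). replace (m+1)%nat with (S m) in H by lia.
  assert (nth t l 0 >= nth m l 0) by (apply IHHtt; lia). specialize (H ltac:(lia)). lra.
Qed.

Lemma nonincr_comb2 N u u' l : 0 <= l <= 1 -> nonincr N u -> nonincr N u' -> nonincr N (comb2 N l u u').
Proof.
  intros Hl Hu Hu' t Ht. rewrite !comb2_nth by lia. specialize (Hu t Ht). specialize (Hu' t Ht).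
  assert (l * nth t u 0 >= l * nth (t+1) u 0) by (apply Rmult_ge_compat_l; lra).
  assert ((1-l) * nth t u' 0 >= (1-l) * nth (t+1) u' 0) by (apply Rmult_ge_compat_l; lra). lra.
Qed.

Definition psum (j : nat) (l : list R) : R := sumR j (fun t => nth t l 0).

Lemma psum_S j l : psum (S j) l = psum j l + nth j l 0.
Proof. reflexivity. Qed.

Lemma psum_length l : psum (length l) l = sum_list l.
Proof. unfold psum; rewrite sum_list_nth; auto. Qed.

Lemma psum_comb2 N j u u' l : (j <= N)%nat -> psum j (comb2 N l u u') = l * psum j u + (1 - l) * psum j u'.
Proof. intros H. unfold psum. rewrite <- !sumR_scal, <- sumR_add. apply sumR_ext. intros; rewrite comb2_nth; auto; lia. Qed.

Lemma sum_list_comb2 N u u' l : length u = N -> length u' = N ->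
  sum_list (comb2 N l u u') = l * sum_list u + (1 - l) * sum_list u'.
Proof.
  intros H1 H2. rewrite <- !psum_length, comb2_length, H1, H2. apply psum_comb2; auto.
Qed.

(* [psum_majorant j l th] bounds the sum of the j first entries of l, with equality when l is
   nonincreasing and th = l_{j-1}.  Being invariant under permutations and jointly convex in
   (l, th), it carries majorization through sorting and convex combinations. *)
Definition psum_majorant (j : nat) (l : list R) (th : R) : R :=
  INR j * th + sumR (length l) (fun t => Rmax (nth t l 0 - th) 0).

Lemma psum_majorant_perm j l l' th : Permutation l l' -> psum_majorant j l th = psum_majorant j l' th.
Proof.
  intros H. unfold psum_majorant. f_equal.
  rewrite <- !(sum_list_map (fun v => Rmax (v - th) 0)). apply sum_list_perm. apply Permutation_map; auto.
Qed.

Lemma psum_le_majorant j l th : (j <= length l)%nat -> psum j l <= psum_majorant j l th.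
Proof.
  intros H. unfold psum, psum_majorant.
  assert (sumR j (fun t => nth t l 0) <= sumR j (fun t => th + Rmax (nth t l 0 - th) 0)).
  { apply sumR_le. intros. pose proof (Rmax_l (nth k l 0 - th) 0). lra. }
  rewrite sumR_add, sumR_const in H0.
  assert (sumR j (fun t => Rmax (nth t l 0 - th) 0) <= sumR (length l) (fun t => Rmax (nth t l 0 - th) 0)).
  { apply sumR_le_range; auto. intros; apply Rmax_r. }
  lra.
Qed.

Lemma psum_majorant_attained j l : nonincr (length l) l -> (j <= length l)%nat ->
  exists th, psum_majorant j l th = psum j l.
Proof.
  intros Hs Hj. unfold psum_majorant, psum. destruct j.
  - exists (sumR (length l) (fun t => Rabs (nth t l 0))). simpl. rewrite Rmult_0_l, Rplus_0_l.
    rewrite (sumR_ext _ _ (fun _ => 0)). apply sumR_const0. intros k Hk.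
    pose proof (le_sumR_abs (length l) (fun t => nth t l 0) k Hk). simpl in H. apply Rmax_right. lra.
  - exists (nth j l 0). replace (length l) with (S j + (length l - S j))%nat by lia. rewrite sumR_split.
    rewrite (sumR_ext (length l - S j) _ (fun _ => 0)). rewrite sumR_const0.
    rewrite (sumR_ext (S j) _ (fun t => nth t l 0 + - nth j l 0)). rewrite sumR_add, sumR_const. ring.
    + intros k Hk. apply Rmax_left. pose proof (nonincr_mono _ _ k j Hs ltac:(lia) ltac:(lia)). lra.
    + intros k Hk. apply Rmax_right. pose proof (nonincr_mono _ _ j (S j + k) Hs ltac:(lia) ltac:(lia)). lra.
Qed.

Lemma Rmax0_convex x y l : 0 <= l <= 1 -> Rmax (l * x + (1 - l) * y) 0 <= l * Rmax x 0 + (1 - l) * Rmax y 0.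
Proof.
  intros Hl. apply Rmax_lub.
  - assert (l * x <= l * Rmax x 0) by (apply Rmult_le_compat_l; [lra|apply Rmax_l]).
    assert ((1 - l) * y <= (1 - l) * Rmax y 0) by (apply Rmult_le_compat_l; [lra|apply Rmax_l]). lra.
  - assert (0 <= l * Rmax x 0) by (apply Rmult_le_pos; [lra|apply Rmax_r]).
    assert (0 <= (1-l) * Rmax y 0) by (apply Rmult_le_pos; [lra|apply Rmax_r]). lra.
Qed.

Lemma psum_majorant_convex N j x x' l th th' : length x = N -> length x' = N -> 0 <= l <= 1 ->
  psum_majorant j (comb2 N l x x') (l * th + (1 - l) * th') <=
  l * psum_majorant j x th + (1 - l) * psum_majorant j x' th'.
Proof.
  intros H1 H2 Hl. unfold psum_majorant. rewrite comb2_length, H1, H2.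
  rewrite (sumR_ext N _ (fun t => Rmax (l * (nth t x 0 - th) + (1 - l) * (nth t x' 0 - th')) 0)).
  2:{ intros k Hk. rewrite comb2_nth; auto. f_equal. ring. }
  assert (sumR N (fun t => Rmax (l * (nth t x 0 - th) + (1 - l) * (nth t x' 0 - th')) 0) <=
          sumR N (fun t => l * Rmax (nth t x 0 - th) 0 + (1 - l) * Rmax (nth t x' 0 - th') 0)).
  { apply sumR_le; intros; apply Rmax0_convex; auto. }
  rewrite sumR_add, !sumR_scal in H. lra.
Qed.

Lemma majorizes_intro N u x : length u = N -> length x = N -> nonincr N u ->
  (forall j, (j < N)%nat -> exists th, psum_majorant j x th <= psum j u) -> sum_list u = sum_list x ->
  majorizes u x.
Proof.
  intros Hu Hx Hs Hj Hsum. split; [congruence|]. exists u, (sort_desc x).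
  assert (Hp := sort_desc_perm x).
  repeat split; auto. apply nonincr_sorted; rewrite Hu; auto. apply sort_desc_sorted.
  intros j Hj'. rewrite !sum_list_firstn by (rewrite <- ?(Permutation_length Hp); lia).
  destruct (Hj j ltac:(lia)) as [th Hth].
  pose proof (psum_le_majorant j (sort_desc x) th ltac:(rewrite <- (Permutation_length Hp); lia)).
  rewrite <- (psum_majorant_perm j x) in H by auto. unfold psum in *. lra.
Qed.

Lemma majorizes_elim N u x : majorizes u x -> length u = N -> nonincr N u ->
  (forall j, (j < N)%nat -> exists th, psum_majorant j x th <= psum j u) /\ sum_list u = sum_list x /\
  length x = N.
Proof.
  intros [HL [us [xs [Pu [Su [Px [Sx [Hj Hsum]]]]]]]] Hu Hs. split; [|split; auto; congruence].
  intros j Hjn. assert (Lx : length xs = N) by (rewrite <- (Permutation_length Px); congruence).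
  assert (Lu : length us = N) by (rewrite <- (Permutation_length Pu); congruence).
  destruct (psum_majorant_attained j xs) as [th Hth]. apply sorted_nonincr; auto. lia.
  destruct (psum_majorant_attained j u) as [thu Hthu]. rewrite Hu; auto. lia.
  exists th. rewrite (psum_majorant_perm j x xs) by auto. rewrite Hth.
  specialize (Hj j ltac:(lia)). rewrite !sum_list_firstn in Hj by lia.
  pose proof (psum_le_majorant j us thu ltac:(lia)). rewrite <- (psum_majorant_perm j u us) in H by auto.
  unfold psum in *. lra.
Qed.

Lemma majorizes_comb2 N u u' x x' l : length u = N -> length u' = N -> nonincr N u -> nonincr N u' ->
  0 <= l <= 1 -> majorizes u x -> majorizes u' x' -> majorizes (comb2 N l u u') (comb2 N l x x').
Proof.
  intros Hu Hu' Su Su' Hl M M'. destruct (majorizes_elim N u x M Hu Su) as [J [S Lx]].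
  destruct (majorizes_elim N u' x' M' Hu' Su') as [J' [S' Lx']].
  apply (majorizes_intro N); try apply comb2_length. apply nonincr_comb2; auto.
  - intros j Hj. destruct (J j Hj) as [th H1]. destruct (J' j Hj) as [th' H2]. exists (l * th + (1 - l) * th').
    pose proof (psum_majorant_convex N j x x' l th th' Lx Lx' Hl). rewrite psum_comb2 by lia.
    assert (l * psum_majorant j x th <= l * psum j u) by (apply Rmult_le_compat_l; lra).
    assert ((1-l) * psum_majorant j x' th' <= (1-l) * psum j u') by (apply Rmult_le_compat_l; lra). lra.
  - rewrite !sum_list_comb2 by auto. rewrite S, S'. auto.
Qed.

Lemma majorizes_sort_desc y : majorizes (sort_desc y) y.
Proof.
  assert (Hp := sort_desc_perm y). assert (HL : length (sort_desc y) = length y) by (symmetry; apply Permutation_length; auto).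
  apply (majorizes_intro (length y)); auto. rewrite <- HL. apply sort_desc_nonincr.
  - intros j Hj. destruct (psum_majorant_attained j (sort_desc y)) as [th Hth]. apply sort_desc_nonincr. lia.
    exists th. rewrite (psum_majorant_perm j y (sort_desc y)); auto. lra.
  - symmetry; apply sum_list_perm; auto.
Qed.

Definition permute (N : nat) (f : nat -> nat) (l : list R) : list R := vec N (fun t => nth (f t) l 0).

Lemma permute_Permutation N f l : length l = N -> FinFun.bFun N f -> FinFun.bInjective N f ->
  Permutation l (permute N f l).
Proof.
  intros H1 H2 H3. apply (Permutation_nth l (permute N f l) 0). simpl. unfold permute. rewrite vec_length.
  split; auto. exists f. split. rewrite H1; auto. split. rewrite H1; auto. intros t Ht. rewrite vec_nth; auto. lia.
Qed.

Lemma Permutation_permute l l' : Permutation l l' ->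
  exists f, FinFun.bFun (length l) f /\ FinFun.bInjective (length l) f /\ l' = permute (length l) f l.
Proof.
  intros H. apply (Permutation_nth l l' 0) in H. simpl in H. destruct H as [H1 [f [H2 [H3 H4]]]].
  exists f. split; auto. split; auto. apply list_ext. unfold permute; rewrite vec_length; auto.
  intros t Ht. unfold permute. rewrite vec_nth by lia. apply H4. lia.
Qed.

(** * Rado's theorem *)

Lemma ex_least (P : nat -> Prop) t0 : P t0 -> exists t, P t /\ (t <= t0)%nat /\ forall t', (t' < t)%nat -> ~ P t'.
Proof.
  induction t0 as [t0 IH] using (well_founded_induction lt_wf). intros H.
  destruct (classic (exists t', (t' < t0)%nat /\ P t')) as [[t' [H1 H2]]|Hn].
  - destruct (IH t' H1 H2) as [t [A1 [A2 A3]]]. exists t. repeat split; auto. lia.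
  - exists t0. repeat split; auto. intros t' Ht' Hp. apply Hn; eauto.
Qed.

Lemma ex_greatest (P : nat -> Prop) N t0 : P t0 -> (t0 < N)%nat ->
  exists t, P t /\ (t0 <= t < N)%nat /\ forall t', (t < t' < N)%nat -> ~ P t'.
Proof.
  remember (N - t0)%nat as d. revert t0 Heqd. induction d as [d IH] using (well_founded_induction lt_wf).
  intros t0 Hd H Ht0. destruct (classic (exists t', (t0 < t' < N)%nat /\ P t')) as [[t' [H1 H2]]|Hn].
  - destruct (IH (N - t')%nat ltac:(lia) t' eq_refl H2 ltac:(lia)) as [t [A1 [A2 A3]]]. exists t. repeat split; auto; lia.
  - exists t0. repeat split; auto. intros t' Ht' Hp. apply Hn; eauto.
Qed.

Fixpoint ndiff (N : nat) (v y : list R) : nat :=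
  match N with
  | O => O
  | S N' => (ndiff N' v y + if Req_EM_T (nth N' v 0%R) (nth N' y 0%R) then 0 else 1)%nat
  end.

Lemma ndiff_le N v v' y : (forall t, (t < N)%nat -> nth t v 0 = nth t y 0 -> nth t v' 0 = nth t y 0) ->
  (ndiff N v' y <= ndiff N v y)%nat.
Proof.
  induction N; simpl; intros H; auto. assert (IH := IHN ltac:(intros; apply H; auto)).
  destruct (Req_EM_T (nth N v 0) (nth N y 0)) as [E1|E1]; destruct (Req_EM_T (nth N v' 0) (nth N y 0)) as [E2|E2];
    try lia.
  exfalso; apply E2; apply H; auto.
Qed.

Lemma ndiff_lt N v v' y t0 : (forall t, (t < N)%nat -> nth t v 0 = nth t y 0 -> nth t v' 0 = nth t y 0) ->
  (t0 < N)%nat -> nth t0 v 0 <> nth t0 y 0 -> nth t0 v' 0 = nth t0 y 0 -> (ndiff N v' y < ndiff N v y)%nat.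
Proof.
  induction N; intros H Ht0 H1 H2; [lia|]. simpl. destruct (Nat.eq_dec t0 N).
  - subst. assert (IH := ndiff_le N v v' y ltac:(intros; apply H; auto)).
    destruct (Req_EM_T (nth N v 0) (nth N y 0)); destruct (Req_EM_T (nth N v' 0) (nth N y 0)); try lia; contradiction.
  - assert (IH := IHN ltac:(intros; apply H; auto) ltac:(lia) H1 H2).
    destruct (Req_EM_T (nth N v 0) (nth N y 0)) as [E1|E1]; destruct (Req_EM_T (nth N v' 0) (nth N y 0)) as [E2|E2];
      try lia.
    exfalso; apply E2; apply H; auto.
Qed.

Definition swap_index (j k : nat) (t : nat) : nat :=
  if Nat.eqb t j then k else if Nat.eqb t k then j else t.

Lemma swap_index_bij N j k : (j < N)%nat -> (k < N)%nat ->
  FinFun.bFun N (swap_index j k) /\ FinFun.bInjective N (swap_index j k).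
Proof.
  intros Hj Hk. split.
  - intros t Ht. unfold swap_index. destruct (Nat.eqb_spec t j); destruct (Nat.eqb_spec t k); lia.
  - intros t t' Ht Ht'. unfold swap_index. destruct (Nat.eqb_spec t j); destruct (Nat.eqb_spec t k);
    destruct (Nat.eqb_spec t' j); destruct (Nat.eqb_spec t' k); lia.
Qed.

Definition transfer (N : nat) (v : list R) (j k : nat) (dl : R) : list R :=
  vec N (fun t => if Nat.eqb t j then nth j v 0 - dl else if Nat.eqb t k then nth k v 0 + dl else nth t v 0).

Lemma transfer_nth N v j k dl t : (t < N)%nat -> nth t (transfer N v j k dl) 0 =
  if Nat.eqb t j then nth j v 0 - dl else if Nat.eqb t k then nth k v 0 + dl else nth t v 0.
Proof. apply vec_nth. Qed.

Lemma psum_transfer N v j k dl l : j <> k -> (l <= N)%nat ->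
  psum l (transfer N v j k dl) = psum l v - (if Nat.ltb j l then dl else 0) + (if Nat.ltb k l then dl else 0).
Proof.
  intros Hjk. induction l; intros Hl. unfold psum; simpl. destruct (Nat.ltb_spec j 0); destruct (Nat.ltb_spec k 0); try lia. ring.
  rewrite !psum_S. rewrite IHl by lia. rewrite transfer_nth by lia.
  destruct (Nat.eqb_spec l j); destruct (Nat.eqb_spec l k); destruct (Nat.ltb_spec j l); destruct (Nat.ltb_spec k l);
  destruct (Nat.ltb_spec j (S l)); destruct (Nat.ltb_spec k (S l)); try lia; subst; ring.
Qed.

Lemma transfer_comb2 N v j k dl : (j < N)%nat -> (k < N)%nat -> j <> k -> nth k v 0 < nth j v 0 ->
  transfer N v j k dl = comb2 N (1 - dl / (nth j v 0 - nth k v 0)) v (permute N (swap_index j k) v).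
Proof.
  intros Hj Hk Hjk Hv. apply list_ext. unfold transfer. rewrite vec_length, comb2_length. auto.
  intros t Ht. unfold transfer in Ht. rewrite vec_length in Ht. rewrite comb2_nth, transfer_nth by auto.
  unfold permute. rewrite vec_nth by auto. unfold swap_index.
  destruct (Nat.eqb_spec t j); destruct (Nat.eqb_spec t k); try lia; subst; field; lra.
Qed.

Section Transfer.
Variables (N j k : nat) (v x : list R) (dl : R).
Hypotheses (Hjk : (j < k)%nat) (HkN : (k < N)%nat) (Sv : nonincr N v) (Sx : nonincr N x)
  (Hmid : forall t, (j < t < k)%nat -> nth t x 0 = nth t v 0)
  (Hdl : 0 < dl) (Hdlj : dl <= nth j v 0 - nth j x 0) (Hdlk : dl <= nth k x 0 - nth k v 0).

Lemma transfer_nonincr : nonincr N (transfer N v j k dl).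
Proof.
  assert (Sxjk : nth j x 0 >= nth k x 0) by (apply (nonincr_mono N); auto; lia).
  intros t Ht. rewrite !transfer_nth by lia. assert (Svt := Sv t Ht).
  destruct (Nat.eqb_spec t j); destruct (Nat.eqb_spec t k); destruct (Nat.eqb_spec (t+1) j);
    destruct (Nat.eqb_spec (t+1) k); try lia.
  - subst. lra.
  - subst. assert (nth (j+1) x 0 = nth (j+1) v 0) by (apply Hmid; lia).
    assert (nth j x 0 >= nth (j+1) x 0) by (apply Sx; lia). lra.
  - subst. lra.
  - subst. lra.
  - assert (nth t x 0 = nth t v 0) by (apply Hmid; lia).
    assert (nth t x 0 >= nth k x 0) by (apply (nonincr_mono N); auto; lia). rewrite <- e in *. lra.
  - lra.
Qed.

Lemma psum_le_transfer : (forall l, (l < N)%nat -> psum l x <= psum l v) ->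
  forall l, (l < N)%nat -> psum l x <= psum l (transfer N v j k dl).
Proof.
  intros HP l Hl. rewrite psum_transfer by lia. assert (HPl := HP l Hl).
  destruct (Nat.ltb_spec j l); destruct (Nat.ltb_spec k l); try lra; try lia.
  (* for j < l <= k the partial sums of x and v differ exactly by x_j - v_j *)
  assert (D1 : psum l x - psum (S j) x <= psum l v - psum (S j) v)
    by (apply sumR_range_le; [lia|intros; rewrite Hmid; lra || lia]).
  assert (D2 : psum l v - psum (S j) v <= psum l x - psum (S j) x)
    by (apply sumR_range_le; [lia|intros; rewrite Hmid; lra || lia]).
  assert (psum j x <= psum j v) by (apply HP; lia). rewrite !psum_S in D1, D2. lra.
Qed.

Lemma ndiff_transfer : (dl = nth j v 0 - nth j x 0 \/ dl = nth k x 0 - nth k v 0) ->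
  (ndiff N (transfer N v j k dl) x < ndiff N v x)%nat.
Proof.
  assert (Hkeep : forall t, (t < N)%nat -> nth t v 0 = nth t x 0 -> nth t (transfer N v j k dl) 0 = nth t x 0).
  { intros t Ht He. rewrite transfer_nth by auto.
    destruct (Nat.eqb_spec t j); destruct (Nat.eqb_spec t k); subst; try lra; auto. }
  intros [E|E].
  - apply (ndiff_lt N v _ x j Hkeep); try lia; try lra. rewrite transfer_nth by lia. rewrite Nat.eqb_refl. lra.
  - apply (ndiff_lt N v _ x k Hkeep); try lia; try lra. rewrite transfer_nth by lia.
    destruct (Nat.eqb_spec k j); try lia. rewrite Nat.eqb_refl. lra.
Qed.

End Transfer.

Lemma transfer_pair N v x : nonincr N v -> nonincr N x -> length v = N -> length x = N ->
  (forall j, (j < N)%nat -> psum j x <= psum j v) -> psum N x = psum N v -> v <> x ->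
  exists j k, (j < k < N)%nat /\ nth j x 0 < nth j v 0 /\ nth k v 0 < nth k x 0 /\
    forall t, (j < t < k)%nat -> nth t x 0 = nth t v 0.
Proof.
  intros Sv Sx Lv Lx HP HN Hne.
  assert (Ht0 : exists t0, (t0 < N)%nat /\ nth t0 v 0 <> nth t0 x 0).
  { apply NNPP. intros Hn. apply Hne, list_ext; [congruence|]. intros t Ht.
    apply NNPP. intros Hc. apply Hn. exists t. split; auto. lia. }
  destruct Ht0 as [t0 Ht0].
  destruct (ex_least (fun t => (t < N)%nat /\ nth t v 0 <> nth t x 0) t0 Ht0) as [t1 [[Ht1 Hne1] [_ Hmin1]]].
  assert (Heq1 : psum t1 x = psum t1 v).
  { unfold psum. apply sumR_ext. intros k Hk. destruct (Req_EM_T (nth k x 0) (nth k v 0)); auto.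
    exfalso. apply (Hmin1 k Hk). split; [lia|auto]. }
  assert (Hlt1 : nth t1 x 0 < nth t1 v 0).
  { assert (HH : psum (S t1) x <= psum (S t1) v).
    { destruct (Nat.eq_dec (S t1) N) as [e|e]. rewrite e; lra. apply HP; lia. }
    rewrite !psum_S in HH. lra. }
  destruct (ex_greatest (fun t => nth t x 0 < nth t v 0) N t1 Hlt1 Ht1) as [j [Hj [Hjr Hjmax]]].
  assert (Hex : exists t, (j < t < N)%nat /\ nth t v 0 < nth t x 0).
  { apply NNPP. intros Hn.
    assert (E : forall t, (j < t < N)%nat -> nth t x 0 = nth t v 0).
    { intros t Ht. assert (~ nth t x 0 < nth t v 0) by (apply Hjmax; lia).
      assert (~ nth t v 0 < nth t x 0) by (intros Hc; apply Hn; exists t; auto). lra. }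
    assert (D1 : psum N x - psum (S j) x <= psum N v - psum (S j) v)
      by (apply sumR_range_le; [lia|intros; rewrite E; lra || lia]).
    assert (psum j x <= psum j v) by (apply HP; lia). rewrite !psum_S in D1. lra. }
  destruct Hex as [k0 Hk0].
  destruct (ex_least (fun t => (j < t < N)%nat /\ nth t v 0 < nth t x 0) k0 Hk0) as [k [[Hjk Hk] [_ Hkmin]]].
  exists j, k. repeat split; auto; try lia.
  intros t Ht. assert (~ nth t x 0 < nth t v 0) by (apply Hjmax; lia).
  assert (~ nth t v 0 < nth t x 0) by (intros Hc; apply (Hkmin t); [lia| split; auto; lia]). lra.
Qed.

Section Rado.
Variable N : nat.
Variable Q : list R -> Prop.
Hypothesis Q_permute : forall z f, Q z -> FinFun.bFun N f -> FinFun.bInjective N f -> Q (permute N f z).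
Hypothesis Q_comb2 : forall z z' l, Q z -> Q z' -> 0 <= l <= 1 -> Q (comb2 N l z z').
Hypothesis Q_length : forall z, Q z -> length z = N.

Lemma Q_transfer v j k dl : Q v -> (j < k < N)%nat -> nth k v 0 < nth j v 0 ->
  0 <= dl <= nth j v 0 - nth k v 0 -> Q (transfer N v j k dl).
Proof.
  intros Qv Hjk Hv Hdl. destruct (swap_index_bij N j k) as [B1 B2]; try lia.
  rewrite transfer_comb2 by (auto; lia). apply Q_comb2; auto.
  assert (0 <= dl / (nth j v 0 - nth k v 0) <= 1); [|lra].
  split. apply Rmult_le_pos; [lra| left; apply Rinv_0_lt_compat; lra].
  apply Rmult_le_reg_r with (nth j v 0 - nth k v 0); [lra|]. unfold Rdiv. rewrite Rmult_assoc, Rinv_l; lra.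
Qed.

Lemma rado_sorted D v x : Q v -> nonincr N v -> nonincr N x -> length x = N ->
  (forall j, (j < N)%nat -> psum j x <= psum j v) -> psum N x = psum N v -> (ndiff N v x <= D)%nat -> Q x.
Proof.
  revert v. induction D; intros v Qv Sv Sx Lx HP HN HD;
    (destruct (classic (v = x)) as [<-|Hne]; [auto|]);
    destruct (transfer_pair N v x Sv Sx (Q_length v Qv) Lx HP HN Hne) as [j [k [Hjk [Hj [Hk Hmid]]]]];
    set (dl := Rmin (nth j v 0 - nth j x 0) (nth k x 0 - nth k v 0));
    assert (Hdl : 0 < dl) by (apply Rmin_glb_lt; lra);
    assert (Hdlj : dl <= nth j v 0 - nth j x 0) by apply Rmin_l;
    assert (Hdlk : dl <= nth k x 0 - nth k v 0) by apply Rmin_r;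
    assert (Hdl' : dl = nth j v 0 - nth j x 0 \/ dl = nth k x 0 - nth k v 0)
      by (unfold dl; destruct (Rle_dec (nth j v 0 - nth j x 0) (nth k x 0 - nth k v 0));
          [left; apply Rmin_left | right; apply Rmin_right]; lra);
    assert (Hlt : (ndiff N (transfer N v j k dl) x < ndiff N v x)%nat)
      by (apply ndiff_transfer; auto; lia).
  - lia.
  - assert (Sxjk : nth j x 0 >= nth k x 0) by (apply (nonincr_mono N); auto; lia).
    apply (IHD (transfer N v j k dl)); auto; try lia.
    + apply Q_transfer; auto; lra.
    + apply (transfer_nonincr N j k v x); auto; lia.
    + apply psum_le_transfer; auto; lia.
    + rewrite psum_transfer by lia. destruct (Nat.ltb_spec j N); destruct (Nat.ltb_spec k N); try lia. lra.
Qed.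

Lemma rado v y : majorizes v y -> Q v -> Q y.
Proof.
  intros [HL [vs [ys [Pv [Sv [Py [Sy [Hj Hsum]]]]]]]] Qv.
  assert (Lv : length v = N) by auto.
  assert (Lvs : length vs = N) by (rewrite <- (Permutation_length Pv); auto).
  assert (Lys : length ys = N) by (rewrite <- (Permutation_length Py); congruence).
  destruct (Permutation_permute v vs Pv) as [f [F1 [F2 ->]]]. rewrite Lv in *.
  assert (Qys : Q ys).
  { apply (rado_sorted (ndiff N (permute N f v) ys) (permute N f v)); auto.
    - rewrite <- Lvs at 1. apply sorted_nonincr; auto.
    - rewrite <- Lys at 1. apply sorted_nonincr; auto.
    - intros j Hj'. specialize (Hj j ltac:(lia)). rewrite !sum_list_firstn in Hj by lia. unfold psum; lra.
    - assert (E : forall l, length l = N -> psum N l = sum_list l) by (intros l <-; apply psum_length).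
      rewrite !E by auto.
      rewrite <- (sum_list_perm _ _ Pv), <- (sum_list_perm _ _ Py). auto. }
  destruct (Permutation_permute ys y (Permutation_sym Py)) as [g [G1 [G2 ->]]]. rewrite Lys in *. auto.
Qed.

End Rado.

(** * Majorized points of conv T lie in conv S *)

Section Hull.
Variables (n m : nat) (a b c d alpha beta : R).

Notation S := (inS n m a b c d alpha beta).
Notation T := (inT n m a b c d alpha beta).

Lemma inS_length p : S p -> length (fst p) = n /\ length (snd p) = m.
Proof. intros [[H1 [H2 _]] _]; auto. Qed.

Lemma inT_inS p : T p -> S p.
Proof. intros [[i [j [_ [_ [H _]]]]]|[j [_ [H _]]]]; auto. Qed.

Lemma inS_permute_x x y f : S (x, y) -> FinFun.bFun n f -> FinFun.bInjective n f -> S (permute n f x, y).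
Proof.
  intros [[H1 [H2 [H3 H4]]] H5] F1 F2. simpl in *. split. split; simpl. unfold permute; apply vec_length.
  split; auto. split; auto. intros t Ht. unfold permute; rewrite vec_nth by auto. apply H3; apply F1; auto.
  simpl. rewrite <- (prod_list_perm (map (fun t => rpow t beta) x) (map (fun t => rpow t beta) (permute n f x))); auto.
  apply Permutation_map, permute_Permutation; auto.
Qed.

Lemma inS_permute_y x y f : S (x, y) -> FinFun.bFun m f -> FinFun.bInjective m f -> S (x, permute m f y).
Proof.
  intros [[H1 [H2 [H3 H4]]] H5] F1 F2. simpl in *. split. split; simpl; auto. split. unfold permute; apply vec_length.
  split; auto. intros t Ht. unfold permute; rewrite vec_nth by auto. apply H4; apply F1; auto.
  simpl. rewrite <- (prod_list_perm (map (fun t => rpow t alpha) y) (map (fun t => rpow t alpha) (permute m f y))); auto.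
  apply Permutation_map, permute_Permutation; auto.
Qed.

Lemma conv_inS_permute_x x y f : conv n m S (x, y) -> FinFun.bFun n f -> FinFun.bInjective n f ->
  conv n m S (permute n f x, y).
Proof.
  intros [H1 [H2 [K [lam [px [py [H3 [H4 [H5 H6]]]]]]]]] F1 F2. simpl in *.
  split. unfold permute; apply vec_length. split; auto. exists K, lam, (fun k => permute n f (px k)), py.
  split; [|split; [auto|split; auto]].
  - intros k Hk. destruct (H3 k Hk) as [A1 A2]. split; auto. apply inS_permute_x; auto.
  - intros t Ht. simpl. unfold permute at 1. rewrite vec_nth by auto. rewrite H5 by (apply F1; auto).
    apply sumR_ext. intros k Hk. unfold permute. rewrite vec_nth; auto.
Qed.

Lemma conv_inS_permute_y x y f : conv n m S (x, y) -> FinFun.bFun m f -> FinFun.bInjective m f ->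
  conv n m S (x, permute m f y).
Proof.
  intros [H1 [H2 [K [lam [px [py [H3 [H4 [H5 H6]]]]]]]]] F1 F2. simpl in *.
  split; auto. split. unfold permute; apply vec_length. exists K, lam, px, (fun k => permute m f (py k)).
  split; [|split; [auto|split; auto]].
  - intros k Hk. destruct (H3 k Hk) as [A1 A2]. split; auto. apply inS_permute_y; auto.
  - intros t Ht. simpl. unfold permute at 1. rewrite vec_nth by auto. rewrite H6 by (apply F1; auto).
    apply sumR_ext. intros k Hk. unfold permute. rewrite vec_nth; auto.
Qed.

Lemma conv_comb2_x (A : pt -> Prop) x x' y l : conv n m A (x, y) -> conv n m A (x', y) -> 0 <= l <= 1 ->
  conv n m A (comb2 n l x x', y).
Proof.
  intros H1 H2 Hl. pose proof (conv_convex n m A _ _ l H1 H2 Hl) as H. unfold pcomb in H; simpl in H.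
  rewrite comb2_same in H; auto. destruct H1 as [_ [L _]]; auto.
Qed.

Lemma conv_comb2_y (A : pt -> Prop) x y y' l : conv n m A (x, y) -> conv n m A (x, y') -> 0 <= l <= 1 ->
  conv n m A (x, comb2 m l y y').
Proof.
  intros H1 H2 Hl. pose proof (conv_convex n m A _ _ l H1 H2 Hl) as H. unfold pcomb in H; simpl in H.
  rewrite comb2_same in H; auto. destruct H1 as [L _]; auto.
Qed.

Lemma conv_inS_majorized_x u x y : majorizes u x -> conv n m S (u, y) -> conv n m S (x, y).
Proof.
  apply (rado n (fun z => conv n m S (z, y))).
  - intros z f Hz F1 F2. apply conv_inS_permute_x; auto.
  - intros z z' l H1 H2 Hl. apply conv_comb2_x; auto.
  - intros z [Hz _]; auto.
Qed.

Lemma conv_inS_majorized_y v x y : majorizes v y -> conv n m S (x, v) -> conv n m S (x, y).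
Proof.
  apply (rado m (fun z => conv n m S (x, z))).
  - intros z f Hz F1 F2. apply conv_inS_permute_y; auto.
  - intros z z' l H1 H2 Hl. apply conv_comb2_y; auto.
  - intros z [_ [Hz _]]; auto.
Qed.

Lemma conv_nonincr (A : pt -> Prop) p : (forall q, A q -> nonincr n (fst q) /\ nonincr m (snd q)) ->
  conv n m A p -> nonincr n (fst p) /\ nonincr m (snd p).
Proof.
  intros HA [H1 [H2 [K [lam [px [py [H3 [H4 [H5 H6]]]]]]]]]. split; intros t Ht.
  - rewrite !H5 by lia. apply Rle_ge, sumR_le. intros k Hk. destruct (H3 k Hk) as [L A1]. apply HA in A1. simpl in A1.
    destruct A1 as [A1 _]. specialize (A1 t Ht). apply Rmult_le_compat_l; lra.
  - rewrite !H6 by lia. apply Rle_ge, sumR_le. intros k Hk. destruct (H3 k Hk) as [L A1]. apply HA in A1. simpl in A1.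
    destruct A1 as [_ A1]. specialize (A1 t Ht). apply Rmult_le_compat_l; lra.
Qed.

Lemma inT_nonincr q : T q -> nonincr n (fst q) /\ nonincr m (snd q).
Proof.
  intros [[i [j [Hi [Hj [[[L1 [L2 [Hx Hy']]] Hp] [Hd [Hc' [Hy [Hb Ha]]]]]]]]]|
          [j [Hj [[[L1 [L2 [Hx Hy']]] Hp] [Hb [Ha Hy]]]]]];
  split; auto; intros t Ht.
  - destruct (Nat.ltb_spec t j). rewrite (Hb t) by lia. assert (nth (t+1) (fst q) 0 <= b) by (apply Hx; lia). lra.
    rewrite (Ha (t+1)%nat) by lia. assert (a <= nth t (fst q) 0) by (apply Hx; lia). lra.
  - destruct (Nat.ltb_spec t j). rewrite (Hb t) by lia. assert (nth (t+1) (fst q) 0 <= b) by (apply Hx; lia). lra.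
    rewrite (Ha (t+1)%nat) by lia. rewrite (Ha t) by lia. lra.
Qed.

Definition majorized_hull (p : pt) : Prop := length (fst p) = n /\ length (snd p) = m /\
  exists u v, majorizes v (snd p) /\ majorizes u (fst p) /\ conv n m T (u, v).

Lemma majorized_hull_conv p : majorized_hull p -> conv n m S p.
Proof.
  destruct p as [x y]. intros [_ [_ [u [v [Mv [Mu C]]]]]].
  apply (conv_inS_majorized_y v); auto. apply (conv_inS_majorized_x u); auto.
  apply (conv_mono n m T); auto. apply inT_inS.
Qed.

Lemma majorized_hull_convex : convex_set n m majorized_hull.
Proof.
  intros p q l [Lp1 [Lp2 [u [v [Mv [Mu Cp]]]]]] [Lq1 [Lq2 [u' [v' [Mv' [Mu' Cq]]]]]] Hl.
  unfold pcomb; simpl. split. apply comb2_length. split. apply comb2_length.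
  destruct (conv_nonincr T _ inT_nonincr Cp) as [Su Sv]. destruct (conv_nonincr T _ inT_nonincr Cq) as [Su' Sv'].
  pose proof Cp as [Lu [Lv _]]. pose proof Cq as [Lu' [Lv' _]]. simpl in *.
  exists (comb2 n l u u'), (comb2 m l v v'). split; [|split].
  - apply majorizes_comb2; auto.
  - apply majorizes_comb2; auto.
  - apply (conv_convex n m T (u, v) (u', v') l); auto.
Qed.

End Hull.

(** * The point u^s *)

Lemma istar_aux_spec a b s N : let i := istar_aux a b s N in
  (i <= N)%nat /\ ((1 <= i)%nat -> INR i * (b - a) < s) /\ ((i + 1 <= N)%nat -> s <= INR (i + 1) * (b - a)).
Proof.
  induction N. simpl. split; [lia|split; intros; lia].
  cbv zeta. cbn [istar_aux]. destruct (Rlt_dec _ s) as [h|h].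
  - split; [lia|split; [intros; auto|intros; lia]].
  - destruct IHN as [H1 [H2 H3]]. split; [lia|split; auto]. intros Hi.
    destruct (Nat.eq_dec (istar_aux a b s N + 1) (S N)) as [e|e]. rewrite e. apply Rnot_lt_le in h. lra. apply H3; lia.
Qed.

Lemma Sfun_nth a x : Sfun a x = sumR (length x) (fun t => nth t x 0 - a).
Proof. unfold Sfun. apply sum_list_map. Qed.

Lemma Sfun_cons a x0 x : Sfun a (x0 :: x) = (x0 - a) + Sfun a x.
Proof. reflexivity. Qed.

Lemma sum_list_Sfun a x : sum_list x = INR (length x) * a + Sfun a x.
Proof.
  rewrite Sfun_nth, sum_list_nth.
  rewrite (sumR_ext _ (fun t => nth t x 0 - a) (fun t => nth t x 0 + (-a))) by (intros; ring).
  rewrite sumR_add, sumR_const. ring.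
Qed.

Lemma Sfun_perm a x x' : Permutation x x' -> Sfun a x = Sfun a x'.
Proof. intros P. unfold Sfun. apply sum_list_perm, Permutation_map; auto. Qed.

Lemma Sfun_comb2 a N x x' l : length x = N -> length x' = N ->
  Sfun a (comb2 N l x x') = l * Sfun a x + (1 - l) * Sfun a x'.
Proof.
  intros H1 H2. rewrite !Sfun_nth, comb2_length, H1, H2. rewrite <- !sumR_scal, <- sumR_add.
  apply sumR_ext. intros t Ht. rewrite comb2_nth; auto. ring.
Qed.

Lemma Sfun_bounds a b N x : length x = N -> (forall t, (t < N)%nat -> a <= nth t x 0 <= b) ->
  0 <= Sfun a x <= INR N * (b - a).
Proof.
  intros L H. rewrite Sfun_nth, L. split. apply sumR_nonneg; intros; pose proof (H k H0); lra.
  rewrite <- sumR_const. apply sumR_le. intros k Hk. pose proof (H k Hk); lra.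
Qed.

Section Ustar.
Variables (n : nat) (a b : R).
Hypotheses (hn : (1 <= n)%nat) (ha : 0 <= a) (hab : a < b).

Lemma ustar_nth s t : (t < n)%nat -> nth t (ustar n a b s) 0 =
  if Nat.ltb t (istar n a b s) then b
  else if Nat.eqb t (istar n a b s) then a + s - (b - a) * INR (istar n a b s) else a.
Proof. intros Ht. unfold ustar. change (map ?f (seq 0 n)) with (vec n f). rewrite vec_nth; auto. Qed.

Lemma ustar_length s : length (ustar n a b s) = n.
Proof. unfold ustar. rewrite length_map, length_seq; auto. Qed.

Section Admissible.
Variable s : R.
Hypothesis hs : 0 <= s <= INR n * (b - a).

Lemma istar_spec : (istar n a b s < n)%nat /\ a <= a + s - (b - a) * INR (istar n a b s) <= b.
Proof.
  destruct (istar_aux_spec a b s n) as [H1 [H2 H3]]. fold (istar n a b s) in *.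
  set (i := istar n a b s) in *. assert (Hi : (i < n)%nat).
  { destruct (Nat.eq_dec i n); [|lia]. exfalso. rewrite e in H2. specialize (H2 hn). lra. }
  split; auto. assert (Hi1 : s <= INR (i + 1) * (b - a)) by (apply H3; lia). rewrite plus_INR in Hi1. simpl in Hi1.
  clearbody i. destruct (Nat.eq_dec i 0). subst. simpl in *. lra. assert (INR i * (b - a) < s) by (apply H2; lia). lra.
Qed.

Lemma ustar_box t : (t < n)%nat -> a <= nth t (ustar n a b s) 0 <= b.
Proof.
  intros Ht. rewrite ustar_nth by auto. destruct istar_spec as [_ H].
  destruct (Nat.ltb t _); [lra|]. destruct (Nat.eqb t _); lra.
Qed.

Lemma ustar_nonneg t : (t < length (ustar n a b s))%nat -> 0 <= nth t (ustar n a b s) 0.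
Proof. intros Ht. rewrite ustar_length in Ht. pose proof (ustar_box t Ht). lra. Qed.

Lemma prod_ustar_nonneg : 0 <= prod_list (ustar n a b s).
Proof. rewrite prod_list_nth. apply prodR_nonneg. intros; apply ustar_nonneg; auto. Qed.

Lemma ustar_nonincr : nonincr n (ustar n a b s).
Proof.
  intros t Ht. rewrite !ustar_nth by lia. destruct istar_spec as [_ H]. set (i := istar n a b s) in *.
  destruct (Nat.ltb_spec t i); destruct (Nat.ltb_spec (t+1) i); destruct (Nat.eqb_spec t i);
    destruct (Nat.eqb_spec (t+1) i); try lia; lra.
Qed.

Lemma psum_ustar j : (j <= n)%nat ->
  psum j (ustar n a b s) = if Nat.leb j (istar n a b s) then INR j * b else INR j * a + s.
Proof.
  destruct istar_spec as [Hi _]. set (i := istar n a b s) in *.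
  induction j; intros Hj. unfold psum; simpl. destruct (Nat.leb_spec 0 i); try lia. ring.
  rewrite psum_S, IHj by lia. rewrite ustar_nth by lia. fold i. rewrite S_INR.
  destruct (Nat.leb_spec j i); destruct (Nat.leb_spec (S j) i); destruct (Nat.ltb_spec j i);
    destruct (Nat.eqb_spec j i); try lia; subst; ring.
Qed.

Lemma sum_list_ustar : sum_list (ustar n a b s) = INR n * a + s.
Proof.
  rewrite <- psum_length, ustar_length, psum_ustar by lia. destruct istar_spec as [Hi _].
  destruct (Nat.leb_spec n (istar n a b s)); [lia|auto].
Qed.

Lemma Sfun_ustar : Sfun a (ustar n a b s) = s.
Proof. pose proof (sum_list_Sfun a (ustar n a b s)). rewrite sum_list_ustar, ustar_length in H. lra. Qed.

End Admissible.

(* u^{S(x)} puts all the mass of x - a on its first coordinates *)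
Lemma majorizes_ustar x : length x = n -> (forall t, (t < n)%nat -> a <= nth t x 0 <= b) ->
  majorizes (ustar n a b (Sfun a x)) x.
Proof.
  intros L H. set (s := Sfun a x). assert (Hs : 0 <= s <= INR n * (b - a)) by (apply (Sfun_bounds a b n); auto).
  apply (majorizes_intro n). apply ustar_length. auto. apply ustar_nonincr; auto.
  - intros j Hj. set (xs := sort_desc x). assert (P := sort_desc_perm x). fold xs in P.
    assert (Lxs : length xs = n) by (rewrite <- (Permutation_length P); auto).
    destruct (psum_majorant_attained j xs) as [th Hth]. apply sort_desc_nonincr. lia.
    exists th. rewrite (psum_majorant_perm j x xs) by auto. rewrite Hth. rewrite psum_ustar by (auto; lia).
    assert (Bx : forall t, (t < n)%nat -> a <= nth t xs 0 <= b)
      by (rewrite <- Lxs; apply (nth_Permutation_bounds x); auto; rewrite L; auto).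
    destruct (Nat.leb_spec j (istar n a b s)).
    + unfold psum. rewrite <- sumR_const. apply sumR_le. intros k Hk. pose proof (Bx k ltac:(lia)). lra.
    + assert (E : psum j xs - INR j * a <= Sfun a xs).
      { rewrite Sfun_nth. unfold psum. rewrite <- sumR_const.
        rewrite (sumR_ext j (fun k => nth k xs 0) (fun k => (nth k xs 0 - a) + a)) by (intros; ring).
        rewrite sumR_add.
        assert (sumR j (fun k => nth k xs 0 - a) <= sumR (length xs) (fun k => nth k xs 0 - a)).
        { apply sumR_le_range. intros k Hk. pose proof (Bx k ltac:(lia)). lra. lia. }
        lra. }
      rewrite <- (Sfun_perm a x xs P) in E. fold s in E. lra.
  - rewrite sum_list_ustar, (sum_list_Sfun a x), L by auto. auto.
Qed.

(* the product of (b,..,b, a + s - i (b - a), a,..,a), with i entries b and k entries a: an affine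
   lower bound for the product of any point of [a,b]^(i+k+1) with S = s, attained by u^s at i = i^s *)
Definition prod_affine (i k : nat) (s : R) : R := b ^ i * a ^ k * (a + s - INR i * (b - a)).

Lemma prod_affine_cons_a i k s x0 Q : a <= x0 -> INR i * (b - a) <= s -> prod_affine i k s <= Q ->
  prod_affine i (S k) (x0 - a + s) <= x0 * Q.
Proof.
  unfold prod_affine. intros H1 H2 H3. set (P := b ^ i * a ^ k) in *.
  assert (HP : 0 <= P) by (unfold P; apply Rmult_le_pos; apply pow_le; lra).
  assert (x0 * (P * (a + s - INR i * (b - a))) <= x0 * Q) by (apply Rmult_le_compat_l; lra).
  assert (0 <= P * ((x0 - a) * (s - INR i * (b - a)))) by (apply Rmult_le_pos; auto; apply Rmult_le_pos; lra).
  replace (b ^ i * a ^ S k) with (a * P) by (unfold P; simpl; ring). nra.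
Qed.

Lemma prod_affine_cons_b i k s x0 Q : a <= x0 <= b -> s <= INR (S i) * (b - a) -> prod_affine i k s <= Q ->
  prod_affine (S i) k (x0 - a + s) <= x0 * Q.
Proof.
  unfold prod_affine. intros H1 H2 H3. rewrite S_INR in *. set (P := b ^ i * a ^ k) in *.
  assert (HP : 0 <= P) by (unfold P; apply Rmult_le_pos; apply pow_le; lra).
  assert (x0 * (P * (a + s - INR i * (b - a))) <= x0 * Q) by (apply Rmult_le_compat_l; lra).
  assert (0 <= P * ((b - x0) * ((INR i + 1) * (b - a) - s))) by (apply Rmult_le_pos; auto; apply Rmult_le_pos; lra).
  replace (b ^ S i * a ^ k) with (b * P) by (unfold P; simpl; ring). nra.
Qed.

Lemma prod_affine_le l : (forall t, (t < length l)%nat -> a <= nth t l 0 <= b) ->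
  forall i k, (i + k + 1 = length l)%nat -> prod_affine i k (Sfun a l) <= prod_list l.
Proof.
  induction l as [|x0 rest IH]; intros Hb i k Hl. simpl in Hl; lia.
  assert (Hx0 : a <= x0 <= b) by (apply (Hb 0%nat); simpl; lia).
  assert (Hr : forall t, (t < length rest)%nat -> a <= nth t rest 0 <= b) by (intros t Ht; apply (Hb (S t)); simpl; lia).
  simpl in Hl. rewrite Sfun_cons. change (prod_list (x0 :: rest)) with (x0 * prod_list rest).
  destruct rest as [|y0 rest'].
  { assert (i = 0%nat /\ k = 0%nat) as [-> ->] by (simpl in Hl; lia). unfold prod_affine, Sfun, prod_list; simpl. lra. }
  assert (HS : 0 <= Sfun a (y0 :: rest') <= INR (length (y0 :: rest')) * (b - a)) by (apply Sfun_bounds; auto).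
  destruct (classic ((1 <= k)%nat /\ INR i * (b - a) <= Sfun a (y0 :: rest'))) as [[Hk HSi]|Hn].
  - replace k with (S (k - 1)) by lia. apply prod_affine_cons_a; [lra | auto | apply IH; auto; lia].
  - assert (Hi : (1 <= i)%nat /\ Sfun a (y0 :: rest') <= INR i * (b - a)).
    { destruct (Nat.eq_dec k 0). subst k. split. simpl in *; lia. replace i with (length (y0 :: rest')) by lia. lra.
      assert (Sfun a (y0 :: rest') < INR i * (b - a)) by (apply Rnot_le_lt; intros Hc; apply Hn; split; [lia|auto]).
      split; [|lra]. destruct i; [simpl in H; lra| lia]. }
    destruct Hi as [Hi HSi]. replace i with (S (i - 1)) by lia.
    apply prod_affine_cons_b; [lra | replace (S (i - 1)) with i by lia; auto | apply IH; auto; lia].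
Qed.

Lemma prod_ustar_affine s : 0 <= s <= INR n * (b - a) ->
  prod_list (ustar n a b s) = prod_affine (istar n a b s) (n - istar n a b s - 1) s.
Proof.
  intros Hs. destruct (istar_spec s Hs) as [Hi _]. set (i := istar n a b s) in *.
  rewrite prod_list_nth, ustar_length. replace n with (i + (1 + (n - i - 1)))%nat at 1 by lia.
  rewrite prodR_split, prodR_succ_l.
  rewrite (prodR_ext i _ (fun _ => b)). rewrite (prodR_ext (n - i - 1) _ (fun _ => a)). rewrite !prodR_const.
  - rewrite Nat.add_0_r, ustar_nth by lia. fold i. rewrite Nat.ltb_irrefl, Nat.eqb_refl. unfold prod_affine. ring.
  - intros k Hk. rewrite ustar_nth by lia. fold i.
    destruct (Nat.ltb_spec (i + S k) i); destruct (Nat.eqb_spec (i + S k) i); try lia; auto.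
  - intros k Hk. rewrite ustar_nth by lia. fold i. destruct (Nat.ltb_spec k i); try lia; auto.
Qed.

Lemma prod_ustar_le x : length x = n -> (forall t, (t < n)%nat -> a <= nth t x 0 <= b) ->
  prod_list (ustar n a b (Sfun a x)) <= prod_list x.
Proof.
  intros L H. assert (Hs := Sfun_bounds a b n x L H). rewrite prod_ustar_affine by auto.
  destruct (istar_spec _ Hs) as [Hi _]. apply prod_affine_le. rewrite L; auto. lia.
Qed.

Lemma prod_affine_le_ustar s i : 0 <= s <= INR n * (b - a) -> (i < n)%nat ->
  prod_affine i (n - i - 1) s <= prod_list (ustar n a b s).
Proof.
  intros Hs Hi. rewrite <- (Sfun_ustar s Hs) at 1. apply prod_affine_le.
  rewrite ustar_length. apply ustar_box; auto. rewrite ustar_length. lia.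
Qed.

End Ustar.

(** * Points of S with x = u^s and y sorted lie in conv T *)

Definition scale (N : nat) (l : list R) (i e : nat) (q : R) : list R :=
  vec N (fun t => if andb (Nat.leb i t) (Nat.ltb t e) then nth t l 0 * q else nth t l 0).

Lemma scale_length N l i e q : length (scale N l i e q) = N.
Proof. apply vec_length. Qed.

Lemma scale_nth N l i e q t : (t < N)%nat -> nth t (scale N l i e q) 0 =
  if andb (Nat.leb i t) (Nat.ltb t e) then nth t l 0 * q else nth t l 0.
Proof. apply vec_nth. Qed.

Lemma scale_in N l i e q t : (t < N)%nat -> (i <= t < e)%nat -> nth t (scale N l i e q) 0 = nth t l 0 * q.
Proof. intros H1 H2. rewrite scale_nth; auto. destruct (Nat.leb_spec i t); destruct (Nat.ltb_spec t e); simpl; auto; lia. Qed.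

Lemma scale_out N l i e q t : (t < N)%nat -> ~ (i <= t < e)%nat -> nth t (scale N l i e q) 0 = nth t l 0.
Proof. intros H1 H2. rewrite scale_nth; auto. destruct (Nat.leb_spec i t); destruct (Nat.ltb_spec t e); simpl; auto; lia. Qed.

Lemma comb2_scale N l i e q1 q2 lam : length l = N -> lam * q1 + (1 - lam) * q2 = 1 ->
  comb2 N lam (scale N l i e q1) (scale N l i e q2) = l.
Proof.
  intros L H. apply list_ext. rewrite comb2_length; auto. intros t Ht. rewrite comb2_length in Ht.
  rewrite comb2_nth, !scale_nth by auto. destruct (andb _ _); [|ring].
  replace (lam * (nth t l 0 * q1) + (1 - lam) * (nth t l 0 * q2)) with (nth t l 0 * (lam * q1 + (1 - lam) * q2))
    by ring.
  rewrite H; ring.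
Qed.

Lemma prod_rpow_scale N l i e q f : length l = N -> (forall t, (t < N)%nat -> 0 <= nth t l 0) -> 0 <= q ->
  (i <= e <= N)%nat ->
  prod_list (map (fun t => rpow t f) (scale N l i e q)) = prod_list (map (fun t => rpow t f) l) * (rpow q f) ^ (e - i).
Proof.
  intros L Hl Hq Hie. rewrite !prod_list_map. rewrite scale_length, L.
  rewrite (prodR_ext N _ (fun t => rpow (nth t l 0) f * (if andb (Nat.leb i t) (Nat.ltb t e) then rpow q f else 1))).
  - rewrite prodR_mult, prodR_indicator. f_equal. f_equal. lia.
  - intros t Ht. rewrite scale_nth by auto. destruct (andb _ _). apply rpow_mult; auto. ring.
Qed.

Lemma exists_step_up u U w W p : 0 < u < U -> 0 < w < W -> 0 < p ->
  exists z, 0 < z /\ u * (1 + z) <= U /\ w * (1 + p * z) <= W /\ (u * (1 + z) = U \/ w * (1 + p * z) = W).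
Proof.
  intros Hu Hw Hp. set (A := U / u - 1). set (C := (W / w - 1) / p).
  assert (HA : u * (1 + A) = U) by (unfold A; field; lra).
  assert (HC : w * (1 + p * C) = W) by (unfold C; field; lra).
  assert (0 < A) by nra. assert (0 < p * C) by nra. assert (0 < C) by nra.
  exists (Rmin A C). pose proof (Rmin_l A C). pose proof (Rmin_r A C).
  split; [apply Rmin_glb_lt; auto|]. split; [nra|]. split; [nra|].
  destruct (Rle_dec A C); [left; rewrite Rmin_left | right; rewrite Rmin_right]; lra.
Qed.

Lemma exists_step_down u L w L' p : 0 <= L < u -> 0 <= L' < w -> 1 < p ->
  exists z, -1 < z < 0 /\ L <= u * (1 + z) /\ L' <= w * (1 + p * z) /\ (u * (1 + z) = L \/ w * (1 + p * z) = L').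
Proof.
  intros Hu Hw Hp. set (A := L / u - 1). set (C := (L' / w - 1) / p).
  assert (HA : u * (1 + A) = L) by (unfold A; field; lra).
  assert (HC : w * (1 + p * C) = L') by (unfold C; field; lra).
  assert (A < 0) by nra. assert (-1 <= p * C < 0) by nra. assert (-1 < C < 0) by nra.
  exists (Rmax A C). pose proof (Rmax_l A C). pose proof (Rmax_r A C).
  split; [split; [lra | apply Rmax_lub_lt; lra]|]. split; [nra|]. split; [nra|].
  destruct (Rle_dec C A); [left; rewrite Rmax_left | right; rewrite Rmax_right]; lra.
Qed.

Section Reduction.
Variables (n m : nat) (a b c d alpha beta : R).
Hypotheses (hn : (1 <= n)%nat) (ha : 0 <= a) (hab : a < b) (hc : 0 <= c)
  (halpha : 0 < alpha) (hbeta : 0 < beta).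

Notation S := (inS n m a b c d alpha beta).
Notation T := (inT n m a b c d alpha beta).
Notation k := (kdef m alpha beta).

Lemma kdef_le : (k <= m)%nat.
Proof. unfold kdef; lia. Qed.

Lemma kdef_lt_mult r : (k + 1 <= r)%nat -> (r <= m)%nat -> beta < INR r * alpha.
Proof.
  intros H1 H2. unfold kdef in *. set (q := beta / alpha) in *.
  assert (Hq : 0 < q) by (unfold q; apply Rdiv_lt_0_compat; auto).
  destruct (base_Int_part q) as [B1 B2].
  assert (HI : (0 <= Int_part q)%Z).
  { assert (HH : IZR (-1) < IZR (Int_part q)) by (simpl; lra). apply lt_IZR in HH. lia. }
  assert (INR r >= IZR (Int_part q) + 1).
  { rewrite <- (Z2Nat.id _ HI). rewrite <- INR_IZR_INZ. rewrite <- S_INR. apply Rle_ge, le_INR. lia. }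
  assert (INR r > q) by lra. unfold q in H0. apply Rmult_gt_compat_r with (r := alpha) in H0; auto.
  unfold Rdiv in H0. rewrite Rmult_assoc, Rinv_l in H0; lra.
Qed.

Definition interior_block (y : list R) (i e : nat) : Prop :=
  (i <= e <= m)%nat /\ (forall t, (t < i)%nat -> nth t y 0 = d) /\ (forall t, (e <= t < m)%nat -> nth t y 0 = c) /\
  (forall t, (i <= t < e)%nat -> c < nth t y 0 < d).

Lemma interior_block_exists y : nonincr m y -> (forall t, (t < m)%nat -> c <= nth t y 0 <= d) ->
  exists i e, interior_block y i e.
Proof.
  intros Sy By.
  assert (Hi : exists i, (i <= m)%nat /\ (forall t, (t < i)%nat -> nth t y 0 = d) /\ ((i < m)%nat -> nth i y 0 < d)).
  { destruct (classic (exists t, (t < m)%nat /\ nth t y 0 < d)) as [[t0 H0]|Hn].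
    - destruct (ex_least (fun t => (t < m)%nat /\ nth t y 0 < d) t0 H0) as [i [[Hi1 Hi2] [Hi3 Hi4]]].
      exists i. split; [lia|split; auto]. intros t Ht. destruct (By t ltac:(lia)) as [Q1 Q2].
      destruct (Rle_lt_or_eq_dec _ _ Q2); auto. exfalso; apply (Hi4 t Ht); split; auto; lia.
    - exists m. split; [lia|split; [|lia]]. intros t Ht. destruct (By t Ht) as [Q1 Q2].
      destruct (Rle_lt_or_eq_dec _ _ Q2); auto. exfalso; apply Hn; eauto. }
  destruct Hi as [i [Hi1 [Hi2 Hi3]]].
  destruct (classic (exists t, (i <= t < m)%nat /\ nth t y 0 <= c)) as [[t0 H0]|Hn].
  - destruct (ex_least (fun t => (i <= t < m)%nat /\ nth t y 0 <= c) t0 H0) as [e [[He1 He2] [He3 He4]]].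
    exists i, e. split; [lia|split; [auto|split]].
    + intros t Ht. assert (nth e y 0 >= nth t y 0) by (apply (nonincr_mono m); auto; lia).
      pose proof (By t ltac:(lia)). lra.
    + intros t Ht. split. apply Rnot_le_lt. intros Hc. apply (He4 t ltac:(lia)). split; auto; lia.
      assert (nth i y 0 >= nth t y 0) by (apply (nonincr_mono m); auto; lia). specialize (Hi3 ltac:(lia)). lra.
  - exists i, m. split; [lia|split; [auto|split]]. intros; lia.
    intros t Ht. split. apply Rnot_le_lt. intros Hc. apply Hn. exists t; split; auto.
    assert (nth i y 0 >= nth t y 0) by (apply (nonincr_mono m); auto; lia). specialize (Hi3 ltac:(lia)). lra.
Qed.

Lemma interior_block_shrink y' i e h : (forall t, (t < i)%nat -> nth t y' 0 = d) ->
  (forall t, (e <= t < m)%nat -> nth t y' 0 = c) ->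
  (i <= h < e)%nat -> (nth h y' 0 = c \/ nth h y' 0 = d) -> (e <= m)%nat ->
  forall i' e', interior_block y' i' e' -> (e' - i' < e - i)%nat.
Proof.
  intros Hd Hc Hh Hcd Hem i' e' [B1 [B2 [B3 B4]]].
  destruct (Nat.eq_dec i' e'). lia.
  assert (i <= i')%nat.
  { destruct (Nat.le_gt_cases i i'); auto. exfalso. specialize (B4 i' ltac:(lia)). rewrite Hd in B4 by lia. lra. }
  assert (e' <= e)%nat.
  { destruct (Nat.le_gt_cases e' e); auto. exfalso. specialize (B4 (e' - 1)%nat ltac:(lia)). rewrite Hc in B4 by lia. lra. }
  assert (~ (i' <= h < e')%nat). { intros Hc'. specialize (B4 h Hc'). destruct Hcd; lra. }
  lia.
Qed.

Definition staircase (j : nat) (x : list R) : Prop :=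
  length x = n /\ (j < n)%nat /\ (forall s, (s < n)%nat -> (s < j)%nat -> nth s x 0 = b) /\
  (forall s, (s < n)%nat -> (j < s)%nat -> nth s x 0 = a) /\ a <= nth j x 0 <= b.

Lemma staircase_ustar s : 0 <= s <= INR n * (b - a) -> staircase (istar n a b s) (ustar n a b s).
Proof.
  intros Hs. destruct (istar_spec n a b hn s Hs) as [Hi Hmid].
  split. apply ustar_length. split; auto. split; [|split].
  - intros t Ht Htj. rewrite ustar_nth by auto. destruct (Nat.ltb_spec t (istar n a b s)); auto; lia.
  - intros t Ht Htj. rewrite ustar_nth by auto. destruct (Nat.ltb_spec t (istar n a b s)); try lia.
    destruct (Nat.eqb_spec t (istar n a b s)); auto; lia.
  - rewrite ustar_nth by auto. rewrite Nat.ltb_irrefl, Nat.eqb_refl. auto.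
Qed.

Lemma inT_staircase_end j x y : staircase j x -> S (x, y) -> nonincr m y ->
  (nth j x 0 = a \/ nth j x 0 = b) -> T (x, y).
Proof.
  intros [L [Hj [Hb [Ha Hx]]]] HS Hy [E|E]; right.
  - exists j. split; [lia|]. split; auto. simpl. split; [|split; auto]. intros s Hs Hsj; auto.
    intros s Hs Hsj. destruct (Nat.eq_dec s j). subst; auto. apply Ha; auto; lia.
  - exists (j + 1)%nat. split; [lia|]. split; auto. simpl. split; [|split; auto].
    intros s Hs Hsj. destruct (Nat.eq_dec s j). subst; auto. apply Hb; auto; lia.
    intros s Hs Hsj. apply Ha; auto; lia.
Qed.

Lemma inT_short_block j x y i e : staircase j x -> S (x, y) -> nonincr m y -> interior_block y i e ->
  (e - i <= k)%nat -> T (x, y).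
Proof.
  intros [L [Hj [Hb [Ha Hx]]]] HS Hy [B1 [B2 [B3 B4]]] Hk. left. pose proof kdef_le.
  exists (Nat.min i (m - k)), j. split; [lia|split; [lia|]]. split; auto. simpl.
  split; [|split; [|split; [auto|split]]].
  - intros t Ht Hti. apply B2. lia.
  - intros t Ht Hti. apply B3. lia.
  - intros s Hs Hsj; auto.
  - intros s Hs Hsj; apply Ha; auto; lia.
Qed.

Lemma staircase_scale j x q : staircase j x -> a <= nth j x 0 * q <= b -> staircase j (scale n x j (j + 1) q).
Proof.
  intros [L [Hj [Hb [Ha Hx]]]] Hq. split. apply scale_length. split; auto. split; [|split].
  - intros s Hs Hsj. rewrite scale_out by lia. auto.
  - intros s Hs Hsj. rewrite scale_out by lia. auto.
  - rewrite scale_in by lia. auto.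
Qed.

Lemma nonincr_scale_block y i e z : nonincr m y -> interior_block y i e -> -1 < z ->
  (forall t, (i <= t < e)%nat -> c <= nth t y 0 * (1 + z) <= d) -> nonincr m (scale m y i e (1 + z)).
Proof.
  intros Sy [B1 [B2 [B3 B4]]] Hz Hyt t Ht. pose proof (Sy t Ht).
  destruct (le_lt_dec i t); destruct (le_lt_dec e t); destruct (le_lt_dec i (t+1)); destruct (le_lt_dec e (t+1));
    try lia.
  all: first
    [ rewrite (scale_out m y i e (1 + z) t), (scale_out m y i e (1 + z) (t+1)) by lia; auto
    | rewrite (scale_out m y i e (1 + z) (t+1)), (scale_in m y i e (1 + z) t) by lia;
      rewrite (B3 (t+1)%nat) by lia; pose proof (Hyt t ltac:(lia)); lra
    | rewrite (scale_in m y i e (1 + z) (t+1)), (scale_in m y i e (1 + z) t) by lia;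
      apply Rle_ge; apply Rmult_le_compat_r; lra
    | rewrite (scale_in m y i e (1 + z) (t+1)), (scale_out m y i e (1 + z) t) by lia;
      rewrite (B2 t) by lia; pose proof (Hyt (t+1)%nat ltac:(lia)); lra ].
Qed.

Lemma inS_scale j x y i e z p : S (x, y) -> (j < n)%nat -> (i <= e <= m)%nat ->
  -1 < z -> 0 <= 1 + p * z -> a <= nth j x 0 * (1 + p * z) <= b ->
  (forall t, (i <= t < e)%nat -> c <= nth t y 0 * (1 + z) <= d) ->
  1 <= p -> p * beta = INR (e - i) * alpha ->
  S (scale n x j (j + 1) (1 + p * z), scale m y i e (1 + z)).
Proof.
  intros [[L1 [L2 [Bx By]]] HP] Hj Hie Hz Hpz Hxj Hyt Hp Hpb. simpl in L1, L2, Bx, By, HP.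
  split; [split; simpl; [apply scale_length | split; [apply scale_length | split]] |].
  - intros s Hs. destruct (Nat.eq_dec s j). subst. rewrite scale_in by lia; auto. rewrite scale_out by lia; auto.
  - intros t Ht. destruct (le_lt_dec i t); destruct (le_lt_dec e t).
    + rewrite scale_out by lia. auto.
    + rewrite scale_in by lia. auto.
    + lia.
    + rewrite scale_out by lia. auto.
  - simpl. assert (Hx0 : forall t, (t < n)%nat -> 0 <= nth t x 0) by (intros t Ht; pose proof (Bx t Ht); lra).
    assert (Hy0 : forall t, (t < m)%nat -> 0 <= nth t y 0) by (intros t Ht; pose proof (By t Ht); lra).
    rewrite (prod_rpow_scale n x j (j + 1) (1 + p * z) beta L1 Hx0 Hpz ltac:(lia)).
    rewrite (prod_rpow_scale m y i e (1 + z) alpha L2 Hy0 ltac:(lra) ltac:(lia)).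
    replace (j + 1 - j)%nat with 1%nat by lia. rewrite pow_1, rpow_pow by lra.
    (* Bernoulli: (1 + p z)^beta <= (1 + z)^(p beta) = (1 + z)^((e - i) alpha) *)
    assert (W : rpow (1 + p * z) beta <= rpow (1 + z) (INR (e - i) * alpha)).
    { rewrite <- Hpb, <- (rpow_rpow (1 + z) p beta) by lra. apply rpow_le. lra.
      split; [lra|]. apply rpow_bernoulli; lra. }
    pose proof (rpow_nonneg (1 + p * z) beta).
    assert (0 <= prod_list (map (fun t => rpow t beta) x)).
    { rewrite prod_list_map. apply prodR_nonneg. intros; apply rpow_nonneg. }
    apply Rle_ge. apply Rmult_le_compat; auto. lra.
Qed.

Section Segment.
Variables (j i e : nat) (x y : list R) (p : R).
Hypotheses (Xf : staircase j x) (HS : S (x, y)) (Sy : nonincr m y) (Bl : interior_block y i e)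
  (Hp : 1 < p) (Hpb : p * beta = INR (e - i) * alpha).
Hypothesis IH : forall x' y', staircase j x' -> S (x', y') -> nonincr m y' ->
  (forall i' e', interior_block y' i' e' -> (e' - i' < e - i)%nat) -> conv n m T (x', y').

Lemma segment_block_nonempty : (i < e)%nat.
Proof. destruct (Nat.eq_dec i e); [|pose proof Bl as [? _]; lia]. subst. rewrite Nat.sub_diag in Hpb. simpl in Hpb. nra. Qed.

Lemma conv_inT_segment_end z :
  -1 < z -> 0 <= 1 + p * z -> a <= nth j x 0 * (1 + p * z) <= b ->
  (forall t, (i <= t < e)%nat -> c <= nth t y 0 * (1 + z) <= d) ->
  (nth i y 0 * (1 + z) = d \/ nth (e - 1) y 0 * (1 + z) = c \/
   nth j x 0 * (1 + p * z) = b \/ nth j x 0 * (1 + p * z) = a) ->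
  conv n m T (scale n x j (j + 1) (1 + p * z), scale m y i e (1 + z)).
Proof.
  intros Hz Hpz Hxj Hyt Hhit. pose proof Xf as [L [Hj _]]. pose proof Bl as [B1 [B2 [B3 B4]]].
  pose proof segment_block_nonempty as Hie.
  pose proof (inS_scale j x y i e z p HS Hj ltac:(lia) Hz Hpz Hxj Hyt ltac:(lra) Hpb) as HS'.
  pose proof (staircase_scale j x (1 + p * z) Xf Hxj) as Xf'.
  pose proof (nonincr_scale_block y i e z Sy Bl Hz Hyt) as Sy'.
  set (Y := scale m y i e (1 + z)) in *.
  assert (Yd : forall t, (t < i)%nat -> nth t Y 0 = d) by (intros t Ht; unfold Y; rewrite scale_out by lia; apply B2; lia).
  assert (Yc : forall t, (e <= t < m)%nat -> nth t Y 0 = c)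
    by (intros t Ht; unfold Y; rewrite scale_out by lia; apply B3; lia).
  destruct (inS_length n m a b c d alpha beta _ HS') as [L1 L2].
  destruct Hhit as [H|[H|H]].
  - apply IH; auto. intros i' e' Bl'. apply (interior_block_shrink Y i e i Yd Yc); auto; try lia.
    right. unfold Y. rewrite scale_in by lia. auto.
  - apply IH; auto. intros i' e' Bl'. apply (interior_block_shrink Y i e (e - 1) Yd Yc); auto; try lia.
    left. unfold Y. rewrite scale_in by lia. auto.
  - apply mem_conv; auto. apply (inT_staircase_end j); auto. rewrite scale_in by lia. lra.
Qed.

(* Move x_j and the interior block of y in opposite directions until a constraint becomes
   active: at both ends of the segment the point is in conv T, and (x, y) lies between them. *)
Lemma conv_inT_split : a < nth j x 0 < b -> conv n m T (x, y).
Proof.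
  intros Ht0. pose proof Xf as [L [Hj _]]. pose proof HS as [[L1 [L2 _]] _]. simpl in L1, L2.
  pose proof Bl as [B1 [B2 [B3 B4]]].
  pose proof segment_block_nonempty as Hie.
  set (yi := nth i y 0). set (ye := nth (e - 1) y 0).
  assert (Hyi : c < yi < d) by (apply B4; lia). assert (Hye : c < ye < d) by (apply B4; lia).
  assert (Hyr : forall t, (i <= t < e)%nat -> ye <= nth t y 0 <= yi)
    by (intros t Ht; split; apply Rge_le; apply (nonincr_mono m); auto; lia).
  destruct (exists_step_up yi d (nth j x 0) b p ltac:(lra) ltac:(lra) ltac:(lra)) as [zp [Hzp [Hp1 [Hp2 Hp3]]]].
  destruct (exists_step_down ye c (nth j x 0) a p ltac:(lra) ltac:(lra) Hp) as [zm [Hzm [Hm1 [Hm2 Hm3]]]].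
  assert (Cp : conv n m T (scale n x j (j + 1) (1 + p * zp), scale m y i e (1 + zp))).
  { apply conv_inT_segment_end; try lra.
    - nra.
    - assert (0 < p * zp) by nra. split; [nra|auto].
    - intros t Ht. pose proof (Hyr t Ht). pose proof (B4 t Ht). split; nra.
    - destruct Hp3; auto. }
  assert (Cm : conv n m T (scale n x j (j + 1) (1 + p * zm), scale m y i e (1 + zm))).
  { apply conv_inT_segment_end; try lra.
    - nra.
    - assert (p * zm < 0) by nra. split; [auto|nra].
    - intros t Ht. pose proof (Hyr t Ht). pose proof (B4 t Ht). split; nra.
    - destruct Hm3; auto. }
  set (lam := - zm / (zp - zm)).
  assert (Hlam : 0 <= lam <= 1).
  { unfold lam. split. unfold Rdiv; apply Rmult_le_pos; [lra|left; apply Rinv_0_lt_compat; lra].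
    apply Rmult_le_reg_r with (zp - zm); [lra|]. unfold Rdiv. rewrite Rmult_assoc, Rinv_l by lra. lra. }
  assert (Hl0 : lam * zp + (1 - lam) * zm = 0) by (unfold lam; field; lra).
  pose proof (conv_convex n m T _ _ lam Cp Cm Hlam) as HH. unfold pcomb in HH. simpl in HH.
  rewrite !comb2_scale in HH; auto; nra.
Qed.

End Segment.

Lemma conv_inT_staircase N : forall j x y, staircase j x -> S (x, y) -> nonincr m y ->
  (forall i e, interior_block y i e -> (e - i <= N)%nat) -> conv n m T (x, y).
Proof.
  induction N; intros j x y Xf HS Sy HB;
    pose proof HS as [[L1 [L2 [Bx By]]] HP]; simpl in L1, L2, Bx, By, HP;
    destruct (interior_block_exists y Sy By) as [i [e Bl]];
    pose proof Xf as [_ [Hj [_ [_ Hx]]]];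
    (destruct (classic (nth j x 0 = a \/ nth j x 0 = b)) as [Hend|Hint];
      [apply mem_conv; auto; apply (inT_staircase_end j); auto|]);
    (destruct (le_lt_dec (e - i) k) as [hk|hk]; [apply mem_conv; auto; apply (inT_short_block j x y i e); auto|]).
  - specialize (HB i e Bl). lia.
  - apply (conv_inT_split j i e x y (INR (e - i) * alpha / beta)); auto.
    + pose proof Bl as [? _]. pose proof (kdef_lt_mult (e - i) ltac:(lia) ltac:(lia)).
      apply Rmult_lt_reg_r with beta; auto. unfold Rdiv. rewrite Rmult_assoc, Rinv_l; lra.
    + field. lra.
    + intros x' y' Xf' HS' Sy' HB'. apply (IHN j); auto. intros i' e' Bl'.
      specialize (HB' i' e' Bl'). specialize (HB i e Bl). lia.
    + lra.
Qed.

Lemma inS_majorized_hull p : S p -> majorized_hull n m a b c d alpha beta p.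
Proof.
  destruct p as [x y]. intros HS. pose proof HS as [[L1 [L2 [Bx By]]] HP]; simpl in L1, L2, Bx, By, HP.
  set (s := Sfun a x). assert (Hs : 0 <= s <= INR n * (b - a)) by (apply (Sfun_bounds a b n); auto).
  set (u := ustar n a b s). set (v := sort_desc y).
  assert (Pv := sort_desc_perm y). fold v in Pv.
  assert (Lv : length v = m) by (rewrite <- (Permutation_length Pv); auto).
  assert (Bv : forall t, (t < m)%nat -> c <= nth t v 0 <= d)
    by (rewrite <- Lv; apply (nth_Permutation_bounds y); auto; rewrite L2; auto).
  split; auto. split; auto. exists u, v. split; [apply majorizes_sort_desc|split; [apply majorizes_ustar; auto|]].
  assert (Su : S (u, v)).
  { split. split; simpl. apply ustar_length. split; auto. split; auto. apply ustar_box; auto.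
    simpl. rewrite <- (prod_list_perm (map (fun t => rpow t alpha) y) (map (fun t => rpow t alpha) v))
      by (apply Permutation_map; auto).
    assert (prod_list (map (fun t => rpow t beta) u) <= prod_list (map (fun t => rpow t beta) x)).
    { rewrite !prod_list_rpow. apply rpow_le. lra. split. apply prod_ustar_nonneg; auto.
      apply prod_ustar_le; auto.
      intros t Ht. rewrite L1 in Ht. pose proof (Bx t Ht); lra.
      apply ustar_nonneg; auto. }
    lra. }
  apply (conv_inT_staircase m (istar n a b s)); auto.
  - apply staircase_ustar; auto.
  - rewrite <- Lv. apply sort_desc_nonincr.
  - intros i e [B1 _]. lia.
Qed.

End Reduction.

(** * The case m alpha <= beta *)

Section Power.
Variables (n m : nat) (a b c d alpha beta : R).
Hypotheses (hn : (1 <= n)%nat) (hm : (1 <= m)%nat) (ha : 0 <= a) (hab : a < b) (hc : 0 <= c)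
  (halpha : 0 < alpha) (hmab : INR m * alpha <= beta).

Notation S := (inS n m a b c d alpha beta).
Notation g := (beta / (INR m * alpha)).

Definition mean_region (p : pt) : Prop := inH n m a b c d p /\
  prod_list (map (fun t => rpow t (1 / INR m)) (snd p)) >=
  prod_list (map (fun t => rpow t g) (ustar n a b (Sfun a (fst p)))).

Lemma INR_m_pos : 0 < INR m.
Proof. apply lt_0_INR; lia. Qed.

Lemma exponent_ge1 : 1 <= g.
Proof.
  pose proof INR_m_pos. assert (0 < INR m * alpha) by (apply Rmult_lt_0_compat; auto).
  apply Rmult_le_reg_r with (INR m * alpha); auto. unfold Rdiv. rewrite Rmult_assoc, Rinv_l by lra. lra.
Qed.

Lemma inS_mean_region p : S p -> mean_region p.
Proof.
  destruct p as [x y]. intros HS. pose proof HS as [[L1 [L2 [Bx By]]] HP]; simpl in L1, L2, Bx, By, HP.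
  split; [apply HS|]. simpl. set (s := Sfun a x).
  assert (Hs : 0 <= s <= INR n * (b - a)) by (apply (Sfun_bounds a b n); auto).
  pose proof INR_m_pos. assert (Hma : 0 < INR m * alpha) by (apply Rmult_lt_0_compat; auto).
  assert (Hx0 : forall t, (t < length x)%nat -> 0 <= nth t x 0)
    by (intros t Ht; rewrite L1 in Ht; pose proof (Bx t Ht); lra).
  assert (Hy0 : forall t, (t < length y)%nat -> 0 <= nth t y 0)
    by (intros t Ht; rewrite L2 in Ht; pose proof (By t Ht); lra).
  rewrite !prod_list_rpow in * by (auto; apply ustar_nonneg; auto).
  assert (HU : rpow (prod_list (ustar n a b s)) beta <= rpow (prod_list x) beta).
  { apply rpow_le. lra. split. apply prod_ustar_nonneg; auto. apply prod_ustar_le; auto. }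
  assert (HY : rpow (prod_list (ustar n a b s)) beta <= rpow (prod_list y) alpha) by lra.
  assert (HYn : 0 <= prod_list y) by (rewrite prod_list_nth; apply prodR_nonneg; auto).
  apply Rle_ge.
  assert (Hpos : 0 <= 1 / (INR m * alpha)) by (unfold Rdiv; rewrite Rmult_1_l; left; apply Rinv_0_lt_compat; auto).
  pose proof (rpow_le _ _ (1 / (INR m * alpha)) Hpos (conj (rpow_nonneg _ _) HY)) as HY'. clear HY.
  rewrite !rpow_rpow in HY' by (auto; apply prod_ustar_nonneg; auto).
  replace (alpha * (1 / (INR m * alpha))) with (1 / INR m) in HY' by (field; lra).
  replace (beta * (1 / (INR m * alpha))) with g in HY' by (field; lra). auto.
Qed.

(* s |-> prod u^s is the maximum of the affine functions prod_affine i (n - i - 1), hence convex *)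
Lemma prod_ustar_convex s s' l : 0 <= s <= INR n * (b - a) -> 0 <= s' <= INR n * (b - a) -> 0 <= l <= 1 ->
  prod_list (ustar n a b (l * s + (1 - l) * s')) <=
  l * prod_list (ustar n a b s) + (1 - l) * prod_list (ustar n a b s').
Proof.
  intros Hs Hs' Hl. set (s'' := l * s + (1 - l) * s').
  assert (Hs'' : 0 <= s'' <= INR n * (b - a)) by (unfold s''; split; nra).
  rewrite (prod_ustar_affine n a b hn s'' Hs''). destruct (istar_spec n a b hn s'' Hs'') as [Hi _].
  set (i := istar n a b s'') in *.
  pose proof (prod_affine_le_ustar n a b hn ha hab s i Hs Hi).
  pose proof (prod_affine_le_ustar n a b hn ha hab s' i Hs' Hi).
  assert (E : prod_affine a b i (n - i - 1) s'' =
              l * prod_affine a b i (n - i - 1) s + (1 - l) * prod_affine a b i (n - i - 1) s')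
    by (unfold prod_affine, s''; ring).
  rewrite E. nra.
Qed.

Lemma prod_rpow_ustar_convex x x' l : length x = n -> length x' = n ->
  (forall t, (t < n)%nat -> a <= nth t x 0 <= b) -> (forall t, (t < n)%nat -> a <= nth t x' 0 <= b) -> 0 <= l <= 1 ->
  prod_list (map (fun t => rpow t g) (ustar n a b (Sfun a (comb2 n l x x')))) <=
  l * prod_list (map (fun t => rpow t g) (ustar n a b (Sfun a x))) +
  (1 - l) * prod_list (map (fun t => rpow t g) (ustar n a b (Sfun a x'))).
Proof.
  intros L1 L2 B1 B2 Hl. rewrite Sfun_comb2 with (N := n) by auto.
  assert (Hs : 0 <= Sfun a x <= INR n * (b - a)) by (apply (Sfun_bounds a b n); auto).
  assert (Hs' : 0 <= Sfun a x' <= INR n * (b - a)) by (apply (Sfun_bounds a b n); auto).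
  assert (Hs'' : 0 <= l * Sfun a x + (1 - l) * Sfun a x' <= INR n * (b - a)) by (split; nra).
  rewrite !prod_list_rpow by (apply ustar_nonneg; auto).
  eapply Rle_trans.
  - apply rpow_le. pose proof exponent_ge1; lra. split. apply prod_ustar_nonneg; auto.
    apply prod_ustar_convex; auto.
  - apply rpow_convex; auto using exponent_ge1, prod_ustar_nonneg.
Qed.

Lemma mean_region_convex : convex_set n m mean_region.
Proof.
  unfold convex_set, mean_region, inH.
  intros [x y] [x' y'] l [[L1 [L2 [Bx By]]] HG] [[L1' [L2' [Bx' By']]] HG'] Hl. simpl in *.
  unfold pcomb; simpl. split. split; simpl. apply comb2_length. split. apply comb2_length. split.
  - intros t Ht. rewrite comb2_nth by auto. pose proof (Bx t Ht); pose proof (Bx' t Ht). split; nra.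
  - intros t Ht. rewrite comb2_nth by auto. pose proof (By t Ht); pose proof (By' t Ht). split; nra.
  - pose proof (prod_rpow_ustar_convex x x' l L1 L1' Bx Bx' Hl).
    assert (GMe : forall z, length z = m -> prod_list (map (fun t => rpow t (1 / INR m)) z) = GM m (fun t => nth t z 0))
      by (intros z Hz; rewrite prod_list_map, Hz; reflexivity).
    rewrite GMe by apply comb2_length. rewrite GMe in HG, HG' by auto.
    rewrite (GM_ext m _ (fun t => l * nth t y 0 + (1 - l) * nth t y' 0)) by (intros; rewrite comb2_nth; auto).
    assert (l * GM m (fun t => nth t y 0) + (1 - l) * GM m (fun t => nth t y' 0) <=
            GM m (fun t => l * nth t y 0 + (1 - l) * nth t y' 0)).
    { apply GM_concave; auto. intros t Ht; pose proof (By t Ht); lra. intros t Ht; pose proof (By' t Ht); lra. }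
    nra.
Qed.

Lemma mean_region_conv_inS p : mean_region p -> conv n m S p.
Proof.
  destruct p as [x y]. intros [[L1 [L2 [Bx By]]] HG]. simpl in *.
  set (s := Sfun a x). assert (Hs : 0 <= s <= INR n * (b - a)) by (apply (Sfun_bounds a b n); auto).
  set (u := ustar n a b s).
  pose proof INR_m_pos. assert (Hma : 0 < INR m * alpha) by (apply Rmult_lt_0_compat; auto).
  assert (Hy0 : forall t, (t < length y)%nat -> 0 <= nth t y 0)
    by (intros t Ht; rewrite L2 in Ht; pose proof (By t Ht); lra).
  (* raising the defining inequality to the power m alpha gives back that of S *)
  assert (Su : S (u, y)).
  { split. split; simpl. apply ustar_length. split; auto. split; auto. apply ustar_box; auto.
    simpl. fold s u in HG. rewrite !prod_list_rpow in * by (auto; apply ustar_nonneg; auto).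
    apply Rge_le in HG.
    pose proof (rpow_le _ _ (INR m * alpha) ltac:(lra) (conj (rpow_nonneg _ _) HG)) as HG'. clear HG.
    rewrite !rpow_rpow in HG' by (auto; try apply prod_ustar_nonneg; auto; rewrite prod_list_nth; apply prodR_nonneg; auto).
    replace (1 / INR m * (INR m * alpha)) with alpha in HG' by (field; lra).
    replace (g * (INR m * alpha)) with beta in HG' by (field; lra). lra. }
  apply (conv_inS_majorized_x n m a b c d alpha beta u); [apply majorizes_ustar; auto|].
  apply mem_conv; auto. apply ustar_length.
Qed.

End Power.

Theorem mainTheorem17 (n m : nat) (a b c d alpha beta : R)
  (hn : (1 <= n)%nat) (hm : (1 <= m)%nat)
  (ha : 0 <= a) (hab : a < b) (hc : 0 <= c) (hcd : c < d)
  (halpha : 0 < alpha) (hbeta : 0 < beta) :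
  (forall p : pt,
     conv n m (inS n m a b c d alpha beta) p <->
     (length (fst p) = n /\ length (snd p) = m /\
      exists u v : list R,
        majorizes v (snd p) /\ majorizes u (fst p) /\
        conv n m (inT n m a b c d alpha beta) (u, v))) /\
  (INR m * alpha <= beta ->
   forall p : pt,
     conv n m (inS n m a b c d alpha beta) p <->
     (inH n m a b c d p /\
      prod_list (map (fun t => rpow t (1 / INR m)) (snd p)) >=
      prod_list (map (fun t => rpow t (beta / (INR m * alpha)))
                     (ustar n a b (Sfun a (fst p)))))).
Proof.
  split.
  - intros p. change (conv n m (inS n m a b c d alpha beta) p <-> majorized_hull n m a b c d alpha beta p).
    split.
    + apply conv_min. apply inS_length. apply inS_majorized_hull; auto. apply majorized_hull_convex.
    + apply majorized_hull_conv.
  - intros Hmab p. change (conv n m (inS n m a b c d alpha beta) p <-> mean_region n m a b c d alpha beta p).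
    split.
    + apply conv_min. apply inS_length. apply inS_mean_region; auto. apply mean_region_convex; auto.
    + apply mean_region_conv_inS; auto.
Qed.
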